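(* Let $\mathcal C$ be a category, $n\ge0$, and $T\in Z^n(\mathcal C)$. For any two degeneracy maps $f:X\to T$ and $g:Y\to T$ in $Z^n(\mathcal C)$ that are sent to the same map of $Z^n(1)$ by the functor $Z^n(\mathcal C)\to Z^n(1)$ (induced by the unique functor $\mathcal C\to 1$ to the terminal category), there exists an isomorphism $\varphi:X\to Y$ such that $f=g\circ\varphi$. In particular, $\mathrm{Deg}(T)$ is finite.
   Context: Notation: for $n\ge 0$, $[n]$ denotes $\{0,\dots,n-1\}$; $\Delta_+$ is the category of these finite total orders and order-preserving maps. For monotone $\psi:[n]\to[m]$ define $\hat\psi:[m+1]\to[n+1]$ by $\hat\psi(i)=\min(\{j\in[n]:\psi(j)\ge i\}\cup\{n\})$. Zigzags: in a category $\mathcal C$, a zigzag $X$ of length $n$ is a diagram $X(r_0)\xrightarrow{x_0} X(s_0)\xleftarrow{x'_0} X(r_1)\to\cdots\xrightarrow{x_{n-1}} X(s_{n-1})\xleftarrow{x'_{n-1}} X(r_n)$. A zigzag map $f:X\to Y$ (lengths $n$, $m$) consists of a monotone $f_s:[n]\to[m]$, regular slices $f(r_i):X(r_{\hat{f_s}(i)})\to Y(r_i)$ for $0\le i\le m$ and singular slices $f(s_j):X(s_j)\to Y(s_{f_s(j)})$ for $0\le j<n$, such that for each $0\le i<m$: if $f_s^{-1}(i)\neq\emptyset$ with least element $p$, greatest $q$, then $f(s_p)\circ x_p=y_i\circ f(r_i)$, $f(s_q)\circ x'_q=y'_i\circ f(r_{i+1})$, $f(s_j)\circ x'_j=f(s_{j+1})\circ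 x_{j+1}$ for $p\le j<q$; if $f_s^{-1}(i)=\emptyset$ then $y_i\circ f(r_i)=y'_i\circ f(r_{i+1})$. Composition: $(g\circ f)_s=g_s\circ f_s$, $(g\circ f)(s_j)=g(s_{f_s(j)})\circ f(s_j)$, $(g\circ f)(r_i)=g(r_i)\circ f(r_{\hat{g_s}(i)})$. This gives a category $Z(\mathcal C)$, functorial in $\mathcal C$ (a functor acts on all objects and slices); $Z^0(\mathcal C)=\mathcal C$, $Z^n(\mathcal C)=Z(Z^{n-1}(\mathcal C))$. $\pi:Z(\mathcal C)\to\Delta_+$ sends a zigzag of length $n$ to $[n]$ and $f$ to $f_s$; $f$ is $\pi$-vertical if $\pi(f)$ is an identity; $f:x\to y$ is $\pi$-cocartesian if for every $h:x\to y'$ and $u:\pi(y)\to\pi(y')$ with $u\circ\pi(f)=\pi(h)$ there is a unique $v:y\to y'$ with $v\circ f=h$, $\pi(v)=u$. Degeneracy maps in $Z^n(\mathcal C)$ (by induction on $n$): in $Z^0(\mathcal C)$ the isomorphisms; for $n\ge1$ the maps generated under composition by simple degeneracy maps (the $\pi$-cocartesian maps $f$ with $\pi(f)$ a monomorphism of $\Delta_+$) and parallel degeneracy maps (the $\pi$-vertical maps whose regular and singular slices are all degeneracy maps in $Z^{n-1}(\mathcal C)$). Degeneracy maps are monomorphisms; $\mathrm{Deg}(T)$ is the subposet of the subobject poset $\mathrm{Sub}(T)$ consisting of subobjects represented by a degeneracy map into $T$. *)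

From mathcomp Require Import all_boot.
Set Implicit Arguments. Unset Strict Implicit. Unset Printing Implicit Defensive.

(** * Categories (Leibniz equality of morphisms) *)
Record category := Category {
  cob : Type;
  chom : cob -> cob -> Type;
  ccomp : forall a b c, chom b c -> chom a b -> chom a c;
  cid : forall a, chom a a;
  ccompA : forall a b c d (h : chom c d) (g : chom b c) (f : chom a b),
      ccomp h (ccomp g f) = ccomp (ccomp h g) f;
  ccomp1l : forall a b (f : chom a b), ccomp (cid b) f = f;
  ccomp1r : forall a b (f : chom a b), ccomp f (cid a) = f }.

(** Data of a category together with predicates singling out the genuine
    objects and morphisms.  [Z D] below is built on raw data; the predicates
    [pvob]/[pvhom] cut out exactly the zigzags and zigzag maps of the paper. *)
Record precat := Precat {
  pob : Type;
  phom : pob -> pob -> Type;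
  pvob : pob -> Prop;
  pvhom : forall a b, phom a b -> Prop;
  pcompose : forall a b c, phom b c -> phom a b -> phom a c;
  pid : forall a, phom a a }.
Arguments phom {p}. Arguments pvob {p}. Arguments pvhom {p a b}.
Arguments pcompose {p a b c}. Arguments pid {p}.

Definition precat_of (C : category) : precat :=
  @Precat (cob C) (@chom C) (fun _ => True) (fun _ _ _ => True) (@ccomp C) (@cid C).

Definition isoP (D : precat) (a b : pob D) (f : phom a b) : Prop :=
  pvhom f /\ exists g : phom b a, pvhom g /\ pcompose g f = pid a /\ pcompose f g = pid b.

Record prefunctor (D E : precat) := Prefunctor {
  fob : pob D -> pob E;
  fhom : forall a b, phom a b -> phom (fob a) (fob b) }.
Arguments fhom {D E} p {a b}.

Definition hcast (D : precat) (a a' b b' : pob D) (ea : a = a') (eb : b = b')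
  (f : phom a b) : phom a' b' :=
  match ea in _ = x, eb in _ = y return phom x y with erefl, erefl => f end.

Definition ordw {n} (i : 'I_n) : 'I_n.+1 := widen_ord (leqnSn n) i.
Definition ords {n} (i : 'I_n) : 'I_n.+1 := lift ord0 i.

Definition hatn (n m : nat) (psi : 'I_n -> 'I_m) (i : 'I_m.+1) : 'I_n.+1 :=
  inord (\big[minn/n]_(j < n | i <= psi j) (j : nat)).

Record zz (D : precat) := Zz {
  zlen : nat;
  zreg : 'I_zlen.+1 -> pob D;
  zsing : 'I_zlen -> pob D;
  zfwd : forall j : 'I_zlen, phom (zreg (ordw j)) (zsing j);
  zbwd : forall j : 'I_zlen, phom (zreg (ords j)) (zsing j) }.
Arguments zlen {D} z. Arguments zreg {D} z i. Arguments zsing {D} z j.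
Arguments zfwd {D} z j. Arguments zbwd {D} z j.

Definition zvob (D : precat) (X : zz D) : Prop :=
  [/\ (forall i, pvob (zreg X i)), (forall j, pvob (zsing X j)),
      (forall j, pvhom (zfwd X j)) & (forall j, pvhom (zbwd X j))].

(** Raw data of a zigzag map: f_s, hat f_s, regular and singular slices *)
Record zzmap (D : precat) (X Y : zz D) := Zzmap {
  mfs : 'I_(zlen X) -> 'I_(zlen Y);
  mfh : 'I_(zlen Y).+1 -> 'I_(zlen X).+1;
  mreg : forall i, phom (zreg X (mfh i)) (zreg Y i);
  msing : forall j, phom (zsing X j) (zsing Y (mfs j)) }.
Arguments mfs {D X Y} z j. Arguments mfh {D X Y} z i.
Arguments mreg {D X Y} z i. Arguments msing {D X Y} z j.

Definition monotone (n m : nat) (u : 'I_n -> 'I_m) : Prop :=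
  forall j j' : 'I_n, j <= j' -> u j <= u j'.

Definition zzvalid (D : precat) (X Y : zz D) (f : zzmap X Y) : Prop :=
  monotone (mfs f) /\
  (forall i, mfh f i = hatn (mfs f) i) /\
  (forall i, pvhom (mreg f i)) /\ (forall j, pvhom (msing f j)) /\
  (forall (i : 'I_(zlen Y)) (p : 'I_(zlen X)) (e : mfs f p = i),
     (forall j, mfs f j = i -> p <= j) ->
     forall e' : mfh f (ordw i) = ordw p,
     pcompose (hcast erefl (congr1 (zsing Y) e) (msing f p)) (zfwd X p)
     = pcompose (zfwd Y i) (hcast (congr1 (zreg X) e') erefl (mreg f (ordw i)))) /\
  (forall (i : 'I_(zlen Y)) (q : 'I_(zlen X)) (e : mfs f q = i),
     (forall j, mfs f j = i -> j <= q) ->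
     forall e' : mfh f (ords i) = ords q,
     pcompose (hcast erefl (congr1 (zsing Y) e) (msing f q)) (zbwd X q)
     = pcompose (zbwd Y i) (hcast (congr1 (zreg X) e') erefl (mreg f (ords i)))) /\
  (* consecutive j, j+1 in the same fibre *)
  (forall (j j' : 'I_(zlen X)) (e : mfs f j' = mfs f j) (e' : ordw j' = ords j),
     pcompose (msing f j) (zbwd X j)
     = pcompose (hcast erefl (congr1 (zsing Y) e) (msing f j'))
             (hcast (congr1 (zreg X) e') erefl (zfwd X j'))) /\
  (forall i : 'I_(zlen Y), (forall j, mfs f j != i) ->
     forall e : mfh f (ords i) = mfh f (ordw i),
     pcompose (zfwd Y i) (mreg f (ordw i))
     = pcompose (zbwd Y i) (hcast (congr1 (zreg X) e) erefl (mreg f (ords i)))).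

Definition zcomp (D : precat) (X Y W : zz D) (g : zzmap Y W) (f : zzmap X Y)
  : zzmap X W :=
  {| mfs := fun j => mfs g (mfs f j);
     mfh := fun i => mfh f (mfh g i);
     mreg := fun i => pcompose (mreg g i) (mreg f (mfh g i));
     msing := fun j => pcompose (msing g (mfs f j)) (msing f j) |}.

Definition zid (D : precat) (X : zz D) : zzmap X X :=
  {| mfs := id; mfh := id; mreg := fun i => pid _; msing := fun j => pid _ |}.

Definition Zpre (D : precat) : precat :=
  @Precat (zz D) (@zzmap D) (@zvob D) (@zzvalid D) (@zcomp D) (@zid D).

Fixpoint Zn (n : nat) (D : precat) : precat :=
  match n with 0 => D | n'.+1 => Zpre (Zn n' D) end.

Definition zfob (D E : precat) (F : prefunctor D E) (X : zz D) : zz E :=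
  {| zlen := zlen X;
     zreg := fun i => fob F (zreg X i);
     zsing := fun j => fob F (zsing X j);
     zfwd := fun j => fhom F (zfwd X j);
     zbwd := fun j => fhom F (zbwd X j) |}.

Definition zfhom (D E : precat) (F : prefunctor D E) (X Y : zz D) (f : zzmap X Y)
  : zzmap (zfob F X) (zfob F Y) :=
  @Zzmap E (zfob F X) (zfob F Y) (mfs f) (mfh f)
     (fun i => fhom F (mreg f i)) (fun j => fhom F (msing f j)).

Definition Zfun (D E : precat) (F : prefunctor D E) : prefunctor (Zpre D) (Zpre E) :=
  @Prefunctor (Zpre D) (Zpre E) (@zfob D E F) (@zfhom D E F).

Fixpoint Znf (n : nat) (D E : precat) (F : prefunctor D E)
  : prefunctor (Zn n D) (Zn n E) :=
  match n return prefunctor (Zn n D) (Zn n E) with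
  | 0 => F
  | n'.+1 => Zfun (Znf n' F)
  end.

Definition termcat : category.
Proof.
refine (@Category unit (fun _ _ => unit) (fun _ _ _ _ _ => tt) (fun _ => tt) _ _ _).
- by [].
- by move=> a b []. 
- by move=> a b [].
Defined.

Definition to_term (C : category) : prefunctor (precat_of C) (precat_of termcat) :=
  @Prefunctor (precat_of C) (precat_of termcat) (fun _ => tt) (fun _ _ _ => tt).

Definition vertical (D : precat) (X Y : zz D) (f : zzmap X Y) : Prop :=
  zlen X = zlen Y /\ forall j, nat_of_ord (mfs f j) = nat_of_ord j.

(** pi-cocartesian maps for pi : Z(D) -> Delta_+ *)
Definition cocartesian (D : precat) (X Y : zz D) (f : zzmap X Y) : Prop :=
  forall (Y' : zz D) (h : zzmap X Y') (u : 'I_(zlen Y) -> 'I_(zlen Y')),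
    zvob Y' -> zzvalid h -> monotone u -> (forall j, u (mfs f j) = mfs h j) ->
    exists v : zzmap Y Y',
      (zzvalid v /\ zcomp v f = h /\ mfs v =1 u) /\
      (forall v' : zzmap Y Y', zzvalid v' -> zcomp v' f = h -> mfs v' =1 u -> v' = v).

Inductive degZ (D : precat) (P : forall a b : pob D, phom a b -> Prop)
  : forall X Y : zz D, zzmap X Y -> Prop :=
| degZ_simple X Y (f : zzmap X Y) :
    zvob X -> zvob Y -> zzvalid f -> cocartesian f -> injective (mfs f) ->
    degZ P f
| degZ_par X Y (f : zzmap X Y) :
    zvob X -> zvob Y -> zzvalid f -> vertical f ->
    (forall i, P _ _ (mreg f i)) -> (forall j, P _ _ (msing f j)) ->
    degZ P f
| degZ_comp X Y W (f : zzmap X Y) (g : zzmap Y W) :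
    degZ P f -> degZ P g -> degZ P (zcomp g f).

Fixpoint isdeg (D : precat) (n : nat) : forall a b : pob (Zn n D), phom a b -> Prop :=
  match n return forall a b : pob (Zn n D), phom a b -> Prop with
  | 0 => fun a b f => isoP f
  | n'.+1 => @degZ (Zn n' D) (@isdeg D n')
  end.

From mathcomp Require Import all_boot.
From Stdlib Require Import FunctionalExtensionality Eqdep ClassicalEpsilon.
Set Implicit Arguments. Unset Strict Implicit. Unset Printing Implicit Defensive.

(* Call a zigzag map f : X -> T "slicewise degenerate" if f_s is injective, all
   slices of f are degeneracy maps one level down, and over every gap i of f_s
   (an i with empty fibre) the composite x_i o f(r_i) is one too.  Parallel
   degeneracy maps are slicewise degenerate by definition.  A simple degeneracy
   map f factors as X -> X' -> T, where X' is X with identity cospans inserted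
   over the gaps; cocartesianness yields a section T -> X' of the second
   factor, whose slices are therefore isomorphisms.  Slicewise degenerate maps
   are closed under composition (a gap of the composite is either a gap of the
   second map or lies over a gap of the first) and are monomorphisms, because
   degeneracy maps one level down are.

   Now let f, g be degeneracy maps into T with the same image in Z^n(1).  Then
   f_s = g_s, and by induction the corresponding slices of f and g differ by
   isomorphisms phi.  As f(r_i) and f(r_i') have the same source whenever
   hat f_s (i) = hat f_s (i'), one must check that these phi agree; this
   follows from the squares over the gaps between i and i', since the gap
   composites are monic.  The phi then assemble into a zigzag map which is an
   isomorphism, again by monicity.  Finiteness follows likewise: up to
   isomorphism a degeneracy map into T is determined by f_s and by the
   isomorphism classes of its slices, of which there are finitely many by
   induction. *)

(** * The adjoint [hatn] of a monotone map *)

Lemma bigmin_leq_mem (I : eqType) (r : seq I) (P : pred I) (F : I -> nat) k idx :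
  k \in r -> P k -> \big[minn/idx]_(j <- r | P j) F j <= F k.
Proof.
elim: r => // a r IH; rewrite inE big_cons => /orP [/eqP <-|Hk] Pk.
  by rewrite Pk geq_minl.
case: (P a); last exact: IH.
by rewrite geq_min IH ?orbT.
Qed.

Section Hat.
Variables n m : nat.
Variable psi : 'I_n -> 'I_m.

Lemma hatnE (i : 'I_m.+1) :
  nat_of_ord (hatn psi i) = \big[minn/n]_(j < n | i <= psi j) (j : nat).
Proof.
rewrite /hatn inordK // ltnS.
by elim/big_rec: _ => // j x _ Hx; rewrite geq_min Hx orbT.
Qed.

Lemma hatn_max : hatn psi ord_max = ord_max.
Proof.
apply/val_inj => /=; rewrite hatnE /=.
by rewrite big_pred0 // => j; rewrite leqNgt ltn_ord.
Qed.

Hypothesis mono : monotone psi.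

Lemma hatn_leq (i : 'I_m.+1) (k : 'I_n) : (hatn psi i <= k) = (i <= psi k).
Proof.
rewrite hatnE; apply/idP/idP => [H|H]; last first.
  by apply: (@bigmin_leq_mem _ _ _ (fun j : 'I_n => (j : nat))); rewrite ?mem_index_enum.
have : \big[minn/n]_(j < n | i <= psi j) (j : nat) = n \/
       exists j : 'I_n, i <= psi j /\ \big[minn/n]_(j < n | i <= psi j) (j : nat) = j.
  elim/big_rec: _ => [|j x Hj [->|[j' [H1 ->]]]]; first by left.
  - by right; exists j; split => //; apply/minn_idPl; apply: ltnW.
  - right; case: (leqP j j') => Hl.
    + by exists j; split => //; apply/minn_idPl.
    + by exists j'; split => //; apply/minn_idPr; apply: ltnW.
case=> [E|[j [H1 E]]]; first by move: H; rewrite E leqNgt ltn_ord.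
by rewrite E in H; apply: leq_trans H1 (mono H).
Qed.

Lemma hatn_unique (i : 'I_m.+1) (h : 'I_n.+1) :
  (forall k : 'I_n, (h <= k) = (i <= psi k)) -> h = hatn psi i.
Proof.
move=> Hh; apply/val_inj => /=.
case: (ltngtP h (hatn psi i)) => // Hlt.
- have hn : h < n by apply: leq_trans Hlt _; rewrite -ltnS.
  have := Hh (Ordinal hn); rewrite leqnn => /esym.
  by rewrite -hatn_leq // leqNgt /= Hlt.
- have hn : hatn psi i < n by apply: leq_trans Hlt _; rewrite -ltnS.
  have := hatn_leq i (Ordinal hn); rewrite /= leqnn => /esym.
  by rewrite -Hh leqNgt /= Hlt.
Qed.

Lemma hatn_mono (i i' : 'I_m.+1) : i <= i' -> hatn psi i <= hatn psi i'.
Proof.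
move=> H; case: (ltnP (hatn psi i') n) => Hn; last first.
  by apply: leq_trans Hn; rewrite -ltnS ltn_ord.
have := leqnn (hatn psi i'); rewrite -[X in _ <= X]/(nat_of_ord (Ordinal Hn)).
rewrite hatn_leq // => H1.
by rewrite -[X in _ <= X]/(nat_of_ord (Ordinal Hn)) hatn_leq //; apply: leq_trans H1.
Qed.

Lemma hatn_first (p : 'I_n) :
  (forall j, psi j = psi p -> p <= j) -> hatn psi (ordw (psi p)) = ordw p.
Proof.
move=> Hp; symmetry; apply: hatn_unique => k /=.
apply/idP/idP => [H|H]; first exact: mono.
rewrite leqNgt; apply/negP => Hlt.
have H2 : psi k <= psi p by apply: mono; apply: ltnW.
have E : psi k = psi p by apply/val_inj/eqP; rewrite eqn_leq H2 H.
by move: (Hp _ E); rewrite leqNgt Hlt.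
Qed.

Lemma hatn_last (q : 'I_n) :
  (forall j, psi j = psi q -> j <= q) -> hatn psi (ords (psi q)) = ords q.
Proof.
move=> Hq; symmetry; apply: hatn_unique => k /=.
apply/idP/idP => [H|H].
- have H1 : psi q <= psi k by apply: mono; apply: ltnW.
  rewrite ltn_neqAle H1 andbT; apply/negP => /eqP E.
  have : k <= q by apply: Hq; apply: val_inj.
  by rewrite leqNgt H.
- rewrite ltnNge; apply/negP => Hkq.
  by have := mono Hkq; rewrite leqNgt H.
Qed.

Lemma hatn_gap (i : 'I_m) :
  (forall j, psi j != i) -> hatn psi (ords i) = hatn psi (ordw i).
Proof.
move=> Hi; apply: hatn_unique => k; rewrite hatn_leq //=.
rewrite [RHS]leq_eqVlt; case: eqP => //= E.
by move: (Hi k); rewrite -(inj_eq val_inj) /= E eqxx.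
Qed.

Hypothesis inj : injective psi.

Lemma hatn_first_inj (p : 'I_n) : hatn psi (ordw (psi p)) = ordw p.
Proof. by apply: hatn_first => j /inj ->. Qed.

Lemma hatn_last_inj (q : 'I_n) : hatn psi (ords (psi q)) = ords q.
Proof. by apply: hatn_last => j /inj ->. Qed.

Lemma hatn_surj (k : 'I_n.+1) : exists i, hatn psi i = k.
Proof.
case: (ltnP k n) => Hk.
  by exists (ordw (psi (Ordinal Hk))); rewrite hatn_first_inj; apply: val_inj.
exists ord_max; rewrite hatn_max; apply: val_inj => /=.
by apply/eqP; rewrite eqn_leq Hk -ltnS ltn_ord.
Qed.

Lemma hatn_fibre_max (k : 'I_n.+1) :
  exists i1, hatn psi i1 = k /\ forall i, hatn psi i = k -> i <= i1.
Proof.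
case: (ltnP k n) => Hk.
- exists (ordw (psi (Ordinal Hk))); split; first by rewrite hatn_first_inj; apply: val_inj.
  move=> i Ei; have := leqnn k; rewrite -[X in _ <= X]/(nat_of_ord (Ordinal Hk)).
  by rewrite -{1}Ei hatn_leq.
- exists ord_max; split; last by move=> i _; rewrite -ltnS ltn_ord.
  rewrite hatn_max; apply: val_inj => /=.
  by apply/eqP; rewrite eqn_leq Hk -ltnS ltn_ord.
Qed.

Lemma monotone_inj_geq (j : 'I_n) : j <= psi j.
Proof.
case: j => j Hj; elim: j Hj => // j IH Hj.
have Hj' : j < n by apply: ltnW.
have H2 : psi (Ordinal Hj') <= psi (Ordinal Hj) by apply: mono => /=.
have H3 : psi (Ordinal Hj') != psi (Ordinal Hj).
  by apply/negP => /eqP /inj /(congr1 val) /= /n_Sn.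
by apply: leq_ltn_trans (IH Hj') _; rewrite ltn_neqAle H3 H2.
Qed.
End Hat.

Lemma monotone_id n : monotone (fun j : 'I_n => j).
Proof. by []. Qed.

Lemma hatn_id n (i : 'I_n.+1) : hatn (fun j : 'I_n => j) i = i.
Proof. by symmetry; apply: hatn_unique. Qed.

Lemma monotone_comp n m p (f : 'I_n -> 'I_m) (g : 'I_m -> 'I_p) :
  monotone f -> monotone g -> monotone (fun j => g (f j)).
Proof. by move=> mf mg j j' H; apply/mg/mf. Qed.

Lemma hatn_comp n m p (f : 'I_n -> 'I_m) (g : 'I_m -> 'I_p) :
  monotone f -> monotone g -> forall i, hatn (fun j => g (f j)) i = hatn f (hatn g i).
Proof.
move=> mf mg i; symmetry; apply: hatn_unique; first exact: monotone_comp.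
by move=> k; rewrite !hatn_leq.
Qed.

Lemma ordw_ords_neq n (j : 'I_n) : ordw j <> ords j.
Proof. by move=> /(congr1 val) /= /n_Sn. Qed.

(** * The category laws for [Z D] *)

Record precat_laws (D : precat) : Prop := PrecatLaws {
  pcompA : forall (a b c d : pob D) (h : phom c d) (g : phom b c) (f : phom a b),
      pcompose h (pcompose g f) = pcompose (pcompose h g) f;
  pcomp1l : forall (a b : pob D) (f : phom a b), pcompose (pid b) f = f;
  pcomp1r : forall (a b : pob D) (f : phom a b), pcompose f (pid a) = f;
  pid_valid : forall a : pob D, pvhom (pid a);
  pcomp_valid : forall (a b c : pob D) (g : phom b c) (f : phom a b),
      pvhom g -> pvhom f -> pvhom (pcompose g f) }.

Lemma precat_of_laws (C : category) : precat_laws (precat_of C).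
Proof. by split => //=; [exact: ccompA | exact: ccomp1l | exact: ccomp1r]. Qed.

Section HCast.
Variable D : precat.

Lemma hcast_valid (a a' b b' : pob D) (ea : a = a') (eb : b = b') (f : phom a b) :
  pvhom f -> pvhom (hcast ea eb f).
Proof. by case: a' / ea; case: b' / eb. Qed.

Lemma hcast_comp (a a' b c c' : pob D) (ea : a = a') (ec : c = c') (g : phom b c)
    (f : phom a b) :
  pcompose (hcast erefl ec g) (hcast ea erefl f) = hcast ea ec (pcompose g f).
Proof. by case: a' / ea; case: c' / ec. Qed.

Lemma hcast_compr (a a' b c : pob D) (ea : a = a') (g : phom b c) (f : phom a b) :
  pcompose g (hcast ea erefl f) = hcast ea erefl (pcompose g f).
Proof. by case: a' / ea. Qed.
End HCast.

Ltac uip := repeat match goal with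
  | H : @eq _ ?x ?y |- _ => rewrite (eq_irrelevance H (erefl x)); clear H
  end.

Lemma zzmap_ext (D : precat) (X Y : zz D) fs fh r r' s s' :
  (forall i, r i = r' i) -> (forall j, s j = s' j) ->
  @Zzmap D X Y fs fh r s = @Zzmap D X Y fs fh r' s'.
Proof.
move=> Hr Hs.
have -> : r = r' by apply: functional_extensionality_dep.
by have -> : s = s' by apply: functional_extensionality_dep.
Qed.

Lemma Zzmap_inj (D : precat) (X Y : zz D) fs fh r r' s s' :
  @Zzmap D X Y fs fh r s = @Zzmap D X Y fs fh r' s' ->
  (forall i, r i = r' i) /\ (forall j, s j = s' j).
Proof.
case=> Er Es.
by rewrite (inj_pair2 _ _ _ _ _ Er) (inj_pair2 _ _ _ _ _ Es).
Qed.

Lemma zzmap_eta (D : precat) (X Y : zz D) (f : zzmap X Y) :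
  @Zzmap D X Y (mfs f) (mfh f) (mreg f) (msing f) = f.
Proof. by case: f. Qed.

Section ZLaws.
Variable D : precat.
Hypothesis HD : precat_laws D.

Lemma zcompA (X Y W V : zz D) (h : zzmap W V) (g : zzmap Y W) (f : zzmap X Y) :
  zcomp h (zcomp g f) = zcomp (zcomp h g) f.
Proof. by apply: zzmap_ext => * /=; rewrite (pcompA HD). Qed.

Lemma zcomp1l (X Y : zz D) (f : zzmap X Y) : zcomp (zid Y) f = f.
Proof. by case: f => fs fh r s; apply: zzmap_ext => * /=; rewrite (pcomp1l HD). Qed.

Lemma zcomp1r (X Y : zz D) (f : zzmap X Y) : zcomp f (zid X) = f.
Proof. by case: f => fs fh r s; apply: zzmap_ext => * /=; rewrite (pcomp1r HD). Qed.

Lemma zid_valid (X : zz D) : zzvalid (zid X).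
Proof.
split; first exact: monotone_id.
split; first by move=> i; rewrite hatn_id.
split; first by move=> i; exact: (pid_valid HD).
split; first by move=> j; exact: (pid_valid HD).
split.
  move=> i p /= e _; case: i / e => e'; uip.
  by rewrite /= (pcomp1l HD) (pcomp1r HD).
split.
  move=> i p /= e _; case: i / e => e'; uip.
  by rewrite /= (pcomp1l HD) (pcomp1r HD).
split; first by move=> j j' /= e; case: j / e => e'; case: (ordw_ords_neq e').
by move=> i /(_ i); rewrite eqxx.
Qed.
End ZLaws.

(* The four commuting squares in [zzvalid] mention casts of slices; we restate
   them as equalities of arrows packed together with their (co)domain indices,
   which composes without any cast bookkeeping. *)

Section Pack.
Variable D : precat.
Variables (I J : Type) (A : I -> pob D) (B : J -> pob D).

Definition parr := {k : I & {i : J & phom (A k) (B i)}}.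
Definition pack k i (a : phom (A k) (B i)) : parr := existT _ k (existT _ i a).

Lemma pack_hcast k k' i i' (ek : k = k') (ei : i = i') (a : phom (A k) (B i)) :
  pack (hcast (congr1 A ek) (congr1 B ei) a) = pack a.
Proof. by case: k' / ek; case: i' / ei. Qed.

Lemma pack_inj k i (a b : phom (A k) (B i)) : pack a = pack b -> a = b.
Proof. by move=> E; apply: (inj_pair2 _ _ _ _ _ (inj_pair2 _ _ _ _ _ E)). Qed.

Lemma pack_eq_idx k k' i i' (a : phom (A k) (B i)) (b : phom (A k') (B i')) :
  pack a = pack b -> k = k' /\ i = i'.
Proof.
move=> E; split; first exact: (congr1 (@projT1 _ _) E).
exact: (congr1 (fun u => projT1 (projT2 u)) E).
Qed.

Lemma pack_eq_hcast k k' i i' (a : phom (A k) (B i)) (b : phom (A k') (B i')) :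
  pack a = pack b -> forall (ek : k = k') (ei : i = i'),
  hcast (congr1 A ek) (congr1 B ei) a = b.
Proof. by move=> E ek ei; apply: pack_inj; rewrite pack_hcast. Qed.
End Pack.
Arguments pack {D I J A B k i}.

Section PackedValidity.
Variable D : precat.

Definition rsarr (X Y : zz D) := parr (zreg X) (zsing Y).
Definition rs (X Y : zz D) k i (a : phom (zreg X k) (zsing Y i)) : rsarr X Y := pack a.
Arguments rs {X Y} k i a.

Definition rs_post (X Y W : zz D) (g : zzmap Y W) (u : rsarr X Y) : rsarr X W :=
  let: existT k (existT i a) := u in rs k (mfs g i) (pcompose (msing g i) a).
Definition rs_pre (X Y W : zz D) (f : zzmap X Y) (u : rsarr Y W) : rsarr X W :=
  let: existT k (existT i a) := u in rs (mfh f k) i (pcompose a (mreg f k)).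

Lemma rs_hcast (X Y : zz D) k k' i i' (ek : k = k') (ei : i = i')
    (a : phom (zreg X k) (zsing Y i)) :
  rs k' i' (hcast (congr1 (zreg X) ek) (congr1 (zsing Y) ei) a) = rs k i a.
Proof. exact: pack_hcast. Qed.

Lemma rs_inj (X Y : zz D) k i (a b : phom (zreg X k) (zsing Y i)) :
  rs k i a = rs k i b -> a = b.
Proof. exact: pack_inj. Qed.

Lemma rs_eq_hcast (X Y : zz D) k k' i (a : phom (zreg X k) (zsing Y i)) b :
  rs k i a = rs k' i b -> forall ek : k = k', hcast (congr1 (zreg X) ek) erefl a = b.
Proof. by move=> E ek; exact: (pack_eq_hcast E ek erefl). Qed.

Variables X Y : zz D.
Implicit Type f : zzmap X Y.

Definition first_sq f := forall p : 'I_(zlen X), (forall j, mfs f j = mfs f p -> p <= j) ->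
  rs (ordw p) (mfs f p) (pcompose (msing f p) (zfwd X p)) =
  rs (mfh f (ordw (mfs f p))) (mfs f p)
     (pcompose (zfwd Y (mfs f p)) (mreg f (ordw (mfs f p)))).
Definition last_sq f := forall q : 'I_(zlen X), (forall j, mfs f j = mfs f q -> j <= q) ->
  rs (ords q) (mfs f q) (pcompose (msing f q) (zbwd X q)) =
  rs (mfh f (ords (mfs f q))) (mfs f q)
     (pcompose (zbwd Y (mfs f q)) (mreg f (ords (mfs f q)))).
Definition inner_sq f :=
  forall j j' : 'I_(zlen X), (j' : nat) = j.+1 -> mfs f j' = mfs f j ->
  rs (ords j) (mfs f j) (pcompose (msing f j) (zbwd X j)) =
  rs (ordw j') (mfs f j') (pcompose (msing f j') (zfwd X j')).
Definition gap_sq f := forall i : 'I_(zlen Y), (forall j, mfs f j != i) ->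
  rs (mfh f (ordw i)) i (pcompose (zfwd Y i) (mreg f (ordw i))) =
  rs (mfh f (ords i)) i (pcompose (zbwd Y i) (mreg f (ords i))).

Definition pvalid f := [/\ monotone (mfs f), (forall i, mfh f i = hatn (mfs f) i),
  (forall i, pvhom (mreg f i)), (forall j, pvhom (msing f j)) &
  [/\ first_sq f, last_sq f, inner_sq f & gap_sq f]].

Lemma zzvalid_pvalid f : zzvalid f -> pvalid f.
Proof.
case=> mo [hf [vr [vs [c1 [c2 [c3 c4]]]]]].
split => //; split.
- move=> p Hp.
  have e' : mfh f (ordw (mfs f p)) = ordw p by rewrite hf hatn_first.
  rewrite (c1 (mfs f p) p erefl Hp e') /=.
  by rewrite hcast_compr -(rs_hcast e' (erefl (mfs f p))).
- move=> q Hq.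
  have e' : mfh f (ords (mfs f q)) = ords q by rewrite hf hatn_last.
  rewrite (c2 (mfs f q) q erefl Hq e') /=.
  by rewrite hcast_compr -(rs_hcast e' (erefl (mfs f q))).
- move=> j j' Hjj' e.
  have e' : ordw j' = ords j by apply: val_inj.
  by rewrite (c3 j j' e e') hcast_comp rs_hcast.
- move=> i Hi.
  have e : mfh f (ords i) = mfh f (ordw i) by rewrite !hf hatn_gap.
  by rewrite (c4 i Hi e) hcast_compr (rs_hcast e (erefl i)).
Qed.

Lemma pvalid_zzvalid f : pvalid f -> zzvalid f.
Proof.
case=> mo hf vr vs [c1 c2 c3 c4].
do 4!split => //; split.
  move=> i p e; case: i / e => Hp e'.
  have := c1 p Hp; rewrite -(rs_hcast e' (erefl (mfs f p))) => /rs_inj ->.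
  by rewrite hcast_compr.
split.
  move=> i q e; case: i / e => Hq e'.
  have := c2 q Hq; rewrite -(rs_hcast e' (erefl (mfs f q))) => /rs_inj ->.
  by rewrite hcast_compr.
split.
  move=> j j' e e'.
  have Hjj' : (j' : nat) = j.+1 by have := congr1 val e'.
  have := c3 j j' Hjj' e; rewrite -(rs_hcast e' e) => /rs_inj ->.
  by rewrite hcast_comp.
move=> i Hi e.
have := c4 i Hi; rewrite -(rs_hcast e (erefl i)) => /rs_inj ->.
by rewrite hcast_compr.
Qed.
End PackedValidity.
Arguments rs {D X Y} k i a.

(** * Composites of zigzag maps are zigzag maps *)

Section Comp.
Variable D : precat.
Hypothesis HD : precat_laws D.
Variables X Y W : zz D.
Variables (f : zzmap X Y) (g : zzmap Y W).
Hypotheses (Hf : pvalid f) (Hg : pvalid g).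

Let psi := mfs f.
Let chi := mfs g.
Let mof : monotone psi. Proof. by case: Hf. Qed.
Let mog : monotone chi. Proof. by case: Hg. Qed.

Definition fwd_leg (q : 'I_(zlen Y)) : rsarr Y W :=
  rs (ordw q) (chi q) (pcompose (msing g q) (zfwd Y q)).
Definition bwd_leg (q : 'I_(zlen Y)) : rsarr Y W :=
  rs (ords q) (chi q) (pcompose (msing g q) (zbwd Y q)).
Definition fwd_tgt (i : 'I_(zlen W)) : rsarr Y W :=
  rs (mfh g (ordw i)) i (pcompose (zfwd W i) (mreg g (ordw i))).
Definition bwd_tgt (i : 'I_(zlen W)) : rsarr Y W :=
  rs (mfh g (ords i)) i (pcompose (zbwd W i) (mreg g (ords i))).

Lemma rs_pre_post k q (a : phom (zreg Y k) (zsing Y q)) :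
  rs_pre f (rs_post g (rs k q a)) = rs_post g (rs_pre f (rs k q a)).
Proof. by rewrite /= (pcompA HD). Qed.

Lemma inner_legs (q q' : 'I_(zlen Y)) :
  (q' : nat) = q.+1 -> chi q' = chi q -> bwd_leg q = fwd_leg q'.
Proof. by case: Hg => _ _ _ _ [_ _ c3 _]; apply: c3. Qed.

Lemma gap_legs (q : 'I_(zlen Y)) :
  (forall p, psi p != q) -> rs_pre f (fwd_leg q) = rs_pre f (bwd_leg q).
Proof.
move=> Hq; case: Hf => _ _ _ _ [_ _ _ c4].
rewrite -[fwd_leg q]/(rs_post g (rs (ordw q) q (zfwd Y q))).
rewrite -[bwd_leg q]/(rs_post g (rs (ords q) q (zbwd Y q))).
by rewrite !rs_pre_post; congr (rs_post g _); exact: c4.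
Qed.

Lemma first_leg (q : 'I_(zlen Y)) :
  (forall j, chi j = chi q -> q <= j) -> fwd_leg q = fwd_tgt (chi q).
Proof. by case: Hg => _ _ _ _ [c1 _ _ _]; apply: c1. Qed.

Lemma last_leg (q : 'I_(zlen Y)) :
  (forall j, chi j = chi q -> j <= q) -> bwd_leg q = bwd_tgt (chi q).
Proof. by case: Hg => _ _ _ _ [_ c2 _ _]; apply: c2. Qed.

Lemma gap_tgt (i : 'I_(zlen W)) : (forall j, chi j != i) -> fwd_tgt i = bwd_tgt i.
Proof. by case: Hg => _ _ _ _ [_ _ _ c4]; apply: c4. Qed.

Lemma comp_fwd_leg (p : 'I_(zlen X)) : (forall j, psi j = psi p -> p <= j) ->
  rs (ordw p) (chi (psi p)) (pcompose (msing (zcomp g f) p) (zfwd X p)) =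
  rs_pre f (fwd_leg (psi p)).
Proof.
move=> H; case: Hf => _ _ _ _ [c1 _ _ _].
rewrite -[fwd_leg _]/(rs_post g (rs (ordw (psi p)) (psi p) (zfwd Y (psi p)))) rs_pre_post.
by rewrite -[rs_pre f _]/(rs _ _ _) -(c1 p H) /= (pcompA HD).
Qed.

Lemma comp_bwd_leg (p : 'I_(zlen X)) : (forall j, psi j = psi p -> j <= p) ->
  rs (ords p) (chi (psi p)) (pcompose (msing (zcomp g f) p) (zbwd X p)) =
  rs_pre f (bwd_leg (psi p)).
Proof.
move=> H; case: Hf => _ _ _ _ [_ c2 _ _].
rewrite -[bwd_leg _]/(rs_post g (rs (ords (psi p)) (psi p) (zbwd Y (psi p)))) rs_pre_post.
by rewrite -[rs_pre f _]/(rs _ _ _) -(c2 p H) /= (pcompA HD).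
Qed.

Lemma fibre_between (j q1 q : 'I_(zlen Y)) :
  chi j = chi q -> j <= q1 -> q1 <= q -> chi q1 = chi q.
Proof.
move=> E H1 H2; apply/val_inj/eqP; rewrite eqn_leq (mog H2) /=.
by rewrite -E; apply: mog.
Qed.

(* Walking through a fibre of [chi] along points missed by [psi]: each step
   uses an inner square of [g] and a gap square of [f]. *)
Lemma fwd_leg_fibre n (q : 'I_(zlen Y)) : (q : nat) = n ->
  (forall q' : 'I_(zlen Y), chi q' = chi q -> q' < q -> forall p, psi p != q') ->
  rs_pre f (fwd_leg q) = rs_pre f (fwd_tgt (chi q)).
Proof.
elim: n q => [|n IH] q Hqn Hq.
  by rewrite first_leg // => j _; rewrite Hqn.
case: (boolP [exists j, (chi j == chi q) && (j < q)]) => [|Hn]; last first.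
  rewrite first_leg // => j Ej; rewrite leqNgt; apply/negP => Hj.
  by move/existsP: Hn; apply; exists j; rewrite Ej eqxx.
move=> /existsP [j /andP [/eqP Ej Hj]].
have Hq1 : n < zlen Y by apply: leq_ltn_trans _ (ltn_ord q); rewrite Hqn.
pose q1 := Ordinal Hq1.
have E1 : chi q1 = chi q.
  by apply: (fibre_between Ej) => /=; [rewrite -ltnS -Hqn | rewrite Hqn].
rewrite -(inner_legs (q := q1) (q' := q)) //.
rewrite -gap_legs; last by apply: Hq => //=; rewrite Hqn.
rewrite -E1; apply: IH => // q' Eq' Hq'; apply: Hq; first by rewrite Eq'.
by apply: ltn_trans Hq' _; rewrite Hqn.
Qed.

Lemma bwd_leg_fibre n (q : 'I_(zlen Y)) : zlen Y - q = n ->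
  (forall q' : 'I_(zlen Y), chi q' = chi q -> q < q' -> forall p, psi p != q') ->
  rs_pre f (bwd_leg q) = rs_pre f (bwd_tgt (chi q)).
Proof.
elim: n q => [|n IH] q Hqn Hq.
  by move: (ltn_ord q); rewrite -subn_gt0 Hqn.
case: (boolP [exists j, (chi j == chi q) && (q < j)]) => [|Hn]; last first.
  rewrite last_leg // => j Ej; rewrite leqNgt; apply/negP => Hj.
  by move/existsP: Hn; apply; exists j; rewrite Ej eqxx.
move=> /existsP [j /andP [/eqP Ej Hj]].
have Hq1 : q.+1 < zlen Y by apply: leq_ltn_trans Hj (ltn_ord j).
pose q1 := Ordinal Hq1.
have E1 : chi q1 = chi q.
  apply/val_inj/eqP; rewrite eqn_leq (@mog q q1 (leqnSn q)) andbT.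
  by rewrite -Ej; apply: mog.
rewrite (inner_legs (q := q) (q' := q1)) //.
rewrite gap_legs; last by apply: Hq => //=; rewrite E1.
rewrite -E1; apply: IH; first by rewrite /= subnS Hqn.
move=> q' Eq' Hq'; apply: Hq; first by rewrite Eq'.
exact: ltn_trans Hq'.
Qed.

Lemma legs_across_gaps n (q1 q2 : 'I_(zlen Y)) :
  (q2 : nat) = n -> q1 < q2 -> chi q1 = chi q2 ->
  (forall q' : 'I_(zlen Y), q1 < q' < q2 -> forall p, psi p != q') ->
  rs_pre f (bwd_leg q1) = rs_pre f (fwd_leg q2).
Proof.
elim: n q2 => [|n IH] q2 Hqn H12 E12 Hq; first by rewrite Hqn in H12.
have Hq3 : n < zlen Y by apply: leq_ltn_trans _ (ltn_ord q2); rewrite Hqn.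
pose q3 := Ordinal Hq3.
case: (ltngtP q1 n) => H13; last first.
- by rewrite (inner_legs (q := q1) (q' := q2)) // Hqn -H13.
- by move: H12; rewrite Hqn ltnS leqNgt H13.
have E3 : chi q3 = chi q2.
  by apply: (fibre_between (j := q1)) => //=; [exact: ltnW | rewrite Hqn].
rewrite -(inner_legs (q := q3) (q' := q2)) //.
rewrite -(gap_legs (q := q3)); last by apply: Hq; apply/andP; split => //=; rewrite Hqn.
apply: IH => //; first by rewrite E3.
move=> q' /andP [H1 H2]; apply: Hq; rewrite H1 /=.
by apply: ltn_trans H2 _; rewrite /= Hqn.
Qed.

Lemma comp_first_sq : first_sq (zcomp g f).
Proof.
move=> p Hp.
have Hp1 : forall j, psi j = psi p -> p <= j.
  by move=> j Ej; apply: Hp => /=; rewrite -/psi Ej.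
rewrite comp_fwd_leg // (fwd_leg_fibre (erefl _)); last first.
  move=> q' Eq' Hq' p'; apply/negP => /eqP Ep'.
  have : p <= p' by apply: Hp => /=; rewrite -/psi -/chi Ep' Eq'.
  by move=> /mof; rewrite -/psi Ep' leqNgt Hq'.
by rewrite /= (pcompA HD).
Qed.

Lemma comp_last_sq : last_sq (zcomp g f).
Proof.
move=> p Hp.
have Hp1 : forall j, psi j = psi p -> j <= p.
  by move=> j Ej; apply: Hp => /=; rewrite -/psi Ej.
rewrite comp_bwd_leg // (bwd_leg_fibre (erefl _)); last first.
  move=> q' Eq' Hq' p'; apply/negP => /eqP Ep'.
  have : p' <= p by apply: Hp => /=; rewrite -/psi -/chi Ep' Eq'.
  by move=> /mof; rewrite -/psi Ep' leqNgt Hq'.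
by rewrite /= (pcompA HD).
Qed.

Lemma comp_inner_sq : inner_sq (zcomp g f).
Proof.
case: (Hf) => _ _ _ _ [_ _ c3f _].
move=> j j' Hjj' E.
case: (eqVneq (psi j') (psi j)) => Epsi.
  have := congr1 (rs_post g) (c3f j j' Hjj' Epsi).
  by rewrite /= -!(pcompA HD).
have Hlt : psi j < psi j'.
  rewrite ltn_neqAle (mof (j := j) (j' := j')); last by rewrite Hjj'.
  by rewrite andbT eq_sym (inj_eq val_inj).
have Hlast : forall j2, psi j2 = psi j -> j2 <= j.
  move=> j2 E2; rewrite leqNgt; apply/negP => H2.
  have : psi j' <= psi j2 by apply: mof; rewrite Hjj'.
  by rewrite E2 leqNgt Hlt.
have Hfirst : forall j2, psi j2 = psi j' -> j' <= j2.
  move=> j2 E2; rewrite leqNgt; apply/negP => H2.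
  have : psi j2 <= psi j by apply: mof; rewrite -ltnS -Hjj'.
  by rewrite E2 leqNgt Hlt.
rewrite comp_bwd_leg // (comp_fwd_leg Hfirst).
apply: (legs_across_gaps (erefl _)) => //.
move=> q' /andP [H1 H2] p; apply/negP => /eqP Ep.
case: (leqP p j) => Hpj; first by move: (mof Hpj); rewrite -/psi Ep leqNgt H1.
have : j' <= p by rewrite Hjj'.
by move=> /mof; rewrite -/psi Ep leqNgt H2.
Qed.

Lemma comp_gap_sq : gap_sq (zcomp g f).
Proof.
move=> i Hi.
transitivity (rs_pre f (fwd_tgt i)); first by rewrite /= (pcompA HD).
transitivity (rs_pre f (bwd_tgt i)); last by rewrite /= (pcompA HD).
case: (boolP [exists q, chi q == i]) => [/existsP [q /eqP Eq]|Hn]; last first.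
  by rewrite gap_tgt // => j; apply/negP => Ej; move/existsP: Hn; apply; exists j.
have Hq : forall q' : 'I_(zlen Y), chi q' = chi q -> forall p, psi p != q'.
  move=> q' Eq' p; apply/negP => /eqP Ep; move: (Hi p).
  by rewrite /= -/psi -/chi Ep Eq' Eq eqxx.
rewrite -Eq -(fwd_leg_fibre (erefl _)); last by move=> q' Eq' _; apply: Hq.
rewrite gap_legs; last exact: Hq.
by rewrite (bwd_leg_fibre (erefl _)) // => q' Eq' _; apply: Hq.
Qed.

Lemma zcomp_pvalid : pvalid (zcomp g f).
Proof.
case: (Hf) => _ hf vrf vsf _; case: (Hg) => _ hg vrg vsg _.
split.
- exact: monotone_comp.
- by move=> i /=; rewrite hg hf (hatn_comp mof mog).
- by move=> i /=; apply: (pcomp_valid HD).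
- by move=> j /=; apply: (pcomp_valid HD).
split; [exact: comp_first_sq | exact: comp_last_sq | exact: comp_inner_sq | exact: comp_gap_sq].
Qed.
End Comp.

Lemma zcomp_valid (D : precat) (HD : precat_laws D) (X Y W : zz D)
    (f : zzmap X Y) (g : zzmap Y W) :
  zzvalid f -> zzvalid g -> zzvalid (zcomp g f).
Proof.
move=> /zzvalid_pvalid Hf /zzvalid_pvalid Hg.
exact/pvalid_zzvalid/zcomp_pvalid.
Qed.

Lemma precat_laws_Z (D : precat) : precat_laws D -> precat_laws (Zpre D).
Proof.
move=> HD; split.
- by move=> *; exact: zcompA.
- by move=> *; exact: zcomp1l.
- by move=> *; exact: zcomp1r.
- exact: zid_valid.
- by move=> a b c g f Hg Hf; exact: zcomp_valid.
Qed.

Lemma precat_laws_Zn (C : category) n : precat_laws (Zn n (precat_of C)).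
Proof. by elim: n => [|n IH]; [exact: precat_of_laws | exact: precat_laws_Z]. Qed.

(** * Slicewise degenerate maps *)

Record deg_axioms (D : precat) (P : forall a b : pob D, phom a b -> Prop) : Prop :=
DegAxioms {
  deg_valid : forall (a b : pob D) (f : phom a b), P a b f -> pvhom f;
  deg_iso : forall (a b : pob D) (f : phom a b), pvob a -> pvob b -> isoP f -> P a b f;
  deg_comp : forall (a b c : pob D) (g : phom b c) (f : phom a b),
     P a b f -> P b c g -> P a c (pcompose g f);
  deg_mono : forall (a b : pob D) (f : phom a b), P a b f ->
     forall (c : pob D) (u v : phom c a), pcompose f u = pcompose f v -> u = v }.

Lemma deg_axioms_iso (C : category) : deg_axioms (@isdeg (precat_of C) 0).
Proof.
split => //=.
- move=> a b c g f [_ [f' [_ [/= f1 f2]]]] [_ [g' [_ [/= g1 g2]]]]; split => //.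
  exists (ccomp f' g'); split => //; split => /=.
  + by rewrite -ccompA (ccompA g') g1 ccomp1l f1.
  + by rewrite -ccompA (ccompA f) f2 ccomp1l g2.
- move=> a b f [_ [f' [_ [/= f1 f2]]]] c u v /= E.
  by rewrite -(ccomp1l u) -(ccomp1l v) -f1 -!ccompA E.
Qed.

Lemma deg_rs (D : precat) (P : forall a b : pob D, phom a b -> Prop) (X Y : zz D)
    k k' i i' (a : phom (zreg X k) (zsing Y i)) (b : phom (zreg X k') (zsing Y i')) :
  rs k i a = rs k' i' b -> P _ _ a -> P _ _ b.
Proof.
move=> E; case: (pack_eq_idx E) => ek ei.
move: b E; case: k' / ek; case: i' / ei => b E.
by rewrite (rs_inj E).
Qed.

Section IsoSlices.
Variable D : precat.
Variables (X Y : zz D) (f : zzmap X Y).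
Hypothesis isof : @isoP (Zpre D) X Y f.

Lemma iso_vertical : vertical f.
Proof.
case: isof => vf [g [vg [E1 E2]]].
case: (zzvalid_pvalid vf) => mof _ _ _ _; case: (zzvalid_pvalid vg) => mog _ _ _ _.
have gf j : mfs g (mfs f j) = j by have := congr1 (fun z => mfs z j) E1.
have fg i : mfs f (mfs g i) = i by have := congr1 (fun z => mfs z i) E2.
have injf : injective (mfs f) by move=> j1 j2 E; rewrite -(gf j1) E gf.
have injg : injective (mfs g) by move=> j1 j2 E; rewrite -(fg j1) E fg.
have vf_eq j : (mfs f j : nat) = j.
  apply/eqP; rewrite eqn_leq monotone_inj_geq // andbT.
  by rewrite -{2}(gf j) monotone_inj_geq.
have vg_eq i : (mfs g i : nat) = i.
  apply/eqP; rewrite eqn_leq monotone_inj_geq // andbT.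
  by rewrite -{2}(fg i) monotone_inj_geq.
split => //; apply/eqP; rewrite eqn_leq; apply/andP; split.
- case: (posnP (zlen X)) => [->//|Hp].
  have H : (zlen X).-1 < zlen X by rewrite prednK.
  by have := ltn_ord (mfs f (Ordinal H)); rewrite vf_eq /= prednK.
- case: (posnP (zlen Y)) => [->//|Hp].
  have H : (zlen Y).-1 < zlen Y by rewrite prednK.
  by have := ltn_ord (mfs g (Ordinal H)); rewrite vg_eq /= prednK.
Qed.

Lemma iso_reg_slice i : isoP (mreg f i).
Proof.
case: isof => vf [g [vg [E1 E2]]].
have H2 := congr1 (fun z => existT (fun k => phom (zreg Y k) (zreg Y i))
  (mfh z i) (mreg z i)) E2.
have H1 := congr1 (fun z => existT (fun k => phom (zreg X k) (zreg X (mfh f i)))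
  (mfh z (mfh f i)) (mreg z (mfh f i))) E1.
have V : pvhom (mreg g (mfh f i)) by case: (zzvalid_pvalid vg).
move: H1 H2 V => /=.
move: (mreg g (mfh f i)); move: (mfh g (mfh f i)) => k G H1 H2 V.
have ek : k = i by have := congr1 (@projT1 _ _) H2.
subst k; split; first by case: (zzvalid_pvalid vf).
exists G; split => //; split; [exact: (inj_pair2 _ _ _ _ _ H1) | exact: (inj_pair2 _ _ _ _ _ H2)].
Qed.

Lemma iso_sing_slice j : isoP (msing f j).
Proof.
case: isof => vf [g [vg [E1 E2]]].
have H1 := congr1 (fun z => existT (fun k => phom (zsing X j) (zsing X k))
  (mfs z j) (msing z j)) E1.
have H2 := congr1 (fun z => existT (fun k => phom (zsing Y (mfs f j)) (zsing Y k))
  (mfs z (mfs f j)) (msing z (mfs f j))) E2.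
have V : pvhom (msing g (mfs f j)) by case: (zzvalid_pvalid vg).
move: H1 H2 V => /=.
move: (msing g (mfs f j)); move: (mfs g (mfs f j)) => k G H1 H2 V.
have ek : k = j by have := congr1 (@projT1 _ _) H1.
subst k; split; first by case: (zzvalid_pvalid vf).
exists G; split => //; split; [exact: (inj_pair2 _ _ _ _ _ H1) | exact: (inj_pair2 _ _ _ _ _ H2)].
Qed.
End IsoSlices.

Section SliceDeg.
Variable D : precat.
Hypothesis HD : precat_laws D.
Variable P : forall a b : pob D, phom a b -> Prop.
Hypothesis HP : deg_axioms P.

Definition slicedeg (X T : zz D) (f : zzmap X T) :=
  [/\ zzvalid f, injective (mfs f), (forall i, P (mreg f i)), (forall j, P (msing f j)) &
      (forall i, (forall j, mfs f j != i) -> P (pcompose (zfwd T i) (mreg f (ordw i))))].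

Lemma slicedeg_vertical (X Y : zz D) (f : zzmap X Y) : zzvalid f -> vertical f ->
  (forall i, P (mreg f i)) -> (forall j, P (msing f j)) -> slicedeg f.
Proof.
move=> Hv [el ev] Hr Hs; split => //.
- by move=> j1 j2 E; apply: val_inj => /=; rewrite -(ev j1) -(ev j2) E.
- move=> i Hi; exfalso.
  have Hi' : (i : nat) < zlen X by rewrite el.
  by move: (Hi (Ordinal Hi')); rewrite -(inj_eq val_inj) /= ev eqxx.
Qed.

(* A gap [i] of [g o f] is either a gap of [g], or [i = g_s q] for a gap [q]
   of [f]; in the latter case the first square of [g] at [q] rewrites the gap
   composite as [g(s_q) o (y_q o f(r_q))]. *)
Lemma slicedeg_comp (X Y W : zz D) (f : zzmap X Y) (g : zzmap Y W) :
  slicedeg f -> slicedeg g -> slicedeg (zcomp g f).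
Proof.
move=> [vf injf rf sf ef] [vg injg rg sg eg]; split.
- exact: zcomp_valid.
- by move=> j1 j2 /injg /injf.
- by move=> i /=; apply: (deg_comp HP).
- by move=> j /=; apply: (deg_comp HP).
move=> i Hi /=.
case: (boolP [exists q, mfs g q == i]) => [/existsP [q /eqP Eq]|Hn]; last first.
  rewrite (pcompA HD); apply: (deg_comp HP) => //; apply: eg.
  by move=> j; apply/negP => Ej; move/existsP: Hn; apply; exists j.
case: i / Eq Hi => Hi.
have Hq p : mfs f p != q by apply/negP => /eqP Ep; move: (Hi p) => /=; rewrite Ep eqxx.
case: (zzvalid_pvalid vg) => mog _ _ _ [c1 _ _ _].
have := congr1 (rs_pre f) (c1 q (fun j Ej => eq_leq (f_equal val (esym (injg _ _ Ej))))).
rewrite /= -!(pcompA HD) => E.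
by apply: (deg_rs E); apply: (deg_comp HP); [exact: ef | exact: sg].
Qed.

Lemma slicedeg_mono (X T : zz D) (f : zzmap X T) : slicedeg f ->
  forall (W : zz D) (u v : zzmap W X), zcomp f u = zcomp f v -> u = v.
Proof.
move=> [vf injf rf sf _] W [us uh ur usg] [vs vh vr vsg] E.
case: (zzvalid_pvalid vf) => mof hf _ _ _.
have Es : us = vs.
  apply: functional_extensionality => j; apply: injf.
  by have := congr1 (fun z => mfs z j) E.
subst vs.
have Eh : uh = vh.
  apply: functional_extensionality => k; case: (hatn_surj mof injf k) => i <-.
  by have := congr1 (fun z => mfh z i) E => /=; rewrite hf.
subst vh.
case: (Zzmap_inj E) => /= Er Esg.
apply: zzmap_ext => [k|j].
- by case: (hatn_surj mof injf k) => i <-; rewrite -hf; exact: (deg_mono HP (rf i) (Er i)).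
- exact: (deg_mono HP (sf (us j)) (Esg j)).
Qed.
End SliceDeg.

(** * Simple degeneracy maps are slicewise degenerate *)

Lemma neq_self_false (T : eqType) (x : T) : x != x -> False.
Proof. by rewrite eqxx. Qed.

Section Simple.
Variable D : precat.
Hypothesis HD : precat_laws D.
Variable P : forall a b : pob D, phom a b -> Prop.
Hypothesis HP : deg_axioms P.
Variables (X T : zz D) (f : zzmap X T).
Hypotheses (zX : zvob X) (zT : zvob T) (vf : zzvalid f) (cf : cocartesian f)
  (injf : injective (mfs f)).

Let psi := mfs f.
Let fh := mfh f.
Let M := zlen T.
Let mof : monotone psi. Proof. by case: (zzvalid_pvalid vf). Qed.
Let hf : forall i, fh i = hatn psi i. Proof. by case: (zzvalid_pvalid vf). Qed.

Lemma fibre_fwd_hat j i (e : psi j = i) : ordw j = fh (ordw i).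
Proof. by case: i / e; rewrite hf hatn_first_inj. Qed.
Lemma fibre_bwd_hat j i (e : psi j = i) : ords j = fh (ords i).
Proof. by case: i / e; rewrite hf hatn_last_inj. Qed.
Lemma gap_hat i (n : forall j, psi j != i) : fh (ordw i) = fh (ords i).
Proof. by rewrite !hf hatn_gap. Qed.

Definition fibre (i : 'I_M) := ({j | psi j = i} + {forall j, psi j != i})%type.
Definition fibre_of (i : 'I_M) : fibre i :=
  match pickP (fun j => psi j == i) with
  | Pick j H => inleft (exist (fun j => psi j = i) j (eqP H))
  | Nopick H => inright (fun j => negbT (H j))
  end.

(* The zigzag [pad] is [X] with an identity cospan on [X(r_(hat i))] inserted
   over every gap [i] of [f_s]; [f] factors as [pad_out o pad_in]. *)
Definition pad_sing i (s : fibre i) : pob D :=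
  match s with inleft (exist j _) => zsing X j | inright _ => zreg X (fh (ordw i)) end.
Definition pad_fwd i (s : fibre i) : phom (zreg X (fh (ordw i))) (pad_sing s) :=
  match s as s0 return phom (zreg X (fh (ordw i))) (pad_sing s0) with
  | inleft (exist j e) => hcast (congr1 (zreg X) (fibre_fwd_hat e)) erefl (zfwd X j)
  | inright _ => pid _
  end.
Definition pad_bwd i (s : fibre i) : phom (zreg X (fh (ords i))) (pad_sing s) :=
  match s as s0 return phom (zreg X (fh (ords i))) (pad_sing s0) with
  | inleft (exist j e) => hcast (congr1 (zreg X) (fibre_bwd_hat e)) erefl (zbwd X j)
  | inright n => hcast (congr1 (zreg X) (gap_hat n)) erefl (pid _)
  end.
Definition pad_in_sing j (s : fibre (psi j)) : phom (zsing X j) (pad_sing s) :=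
  match s as s0 return phom (zsing X j) (pad_sing s0) with
  | inleft (exist j' e) => hcast erefl (congr1 (zsing X) (esym (injf e))) (pid _)
  | inright n => False_rect _ (neq_self_false (n j))
  end.
Definition pad_out_sing i (s : fibre i) : phom (pad_sing s) (zsing T i) :=
  match s as s0 return phom (pad_sing s0) (zsing T i) with
  | inleft (exist j e) => hcast erefl (congr1 (zsing T) e) (msing f j)
  | inright _ => pcompose (zfwd T i) (mreg f (ordw i))
  end.

Definition pad : zz D :=
  {| zlen := M; zreg := fun i => zreg X (fh i); zsing := fun i => pad_sing (fibre_of i);
     zfwd := fun i => pad_fwd (fibre_of i); zbwd := fun i => pad_bwd (fibre_of i) |}.
Definition pad_in : zzmap X pad :=
  @Zzmap D X pad psi fh (fun i => pid (zreg X (fh i))) (fun j => pad_in_sing (fibre_of (psi j))).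
Definition pad_out : zzmap pad T :=
  @Zzmap D pad T (fun i => i) (fun i => i) (fun i => mreg f i)
    (fun i => pad_out_sing (fibre_of i)).

Lemma pad_zvob : zvob pad.
Proof.
case: zX => xo so xf xb; case: zT => to tso tf tb.
split => i /=.
- exact: xo.
- by case: (fibre_of i) => [[j e]|n] /=.
- by case: (fibre_of i) => [[j e]|n] /=; [exact: hcast_valid | exact: (pid_valid HD)].
- by case: (fibre_of i) => [[j e]|n] /=; apply: hcast_valid => //; exact: (pid_valid HD).
Qed.

Lemma pad_in_fwd p (s : fibre (psi p)) (e' : fh (ordw (psi p)) = ordw p) :
  pcompose (pad_in_sing s) (zfwd X p) =
  pcompose (pad_fwd s) (hcast (congr1 (zreg X) e') erefl (pid _)).
Proof.
case: s => [[j e]|n]; last by case: (neq_self_false (n p)).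
have ej := injf e; subst j => /=.
move: (esym (injf e)) => e1; rewrite (eq_irrelevance e1 erefl) /= (pcomp1l HD).
move: (fibre_fwd_hat e) e'; move: (fh (ordw (psi p))) => k e2 e3; subst k; uip.
by rewrite /= (pcomp1r HD).
Qed.

Lemma pad_in_bwd p (s : fibre (psi p)) (e' : fh (ords (psi p)) = ords p) :
  pcompose (pad_in_sing s) (zbwd X p) =
  pcompose (pad_bwd s) (hcast (congr1 (zreg X) e') erefl (pid _)).
Proof.
case: s => [[j e]|n]; last by case: (neq_self_false (n p)).
have ej := injf e; subst j => /=.
move: (esym (injf e)) => e1; rewrite (eq_irrelevance e1 erefl) /= (pcomp1l HD).
move: (fibre_bwd_hat e) e'; move: (fh (ords (psi p))) => k e2 e3; subst k; uip.
by rewrite /= (pcomp1r HD).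
Qed.

Lemma pad_in_gap i (s : fibre i) (Hi : forall j, psi j != i)
    (e : fh (ords i) = fh (ordw i)) :
  pcompose (pad_fwd s) (pid _) =
  pcompose (pad_bwd s) (hcast (congr1 (zreg X) e) erefl (pid _)).
Proof.
case: s => [[j e0]|n]; first by exfalso; move: (Hi j); rewrite e0 eqxx.
by rewrite /=; move: (gap_hat n) e; move: (fh (ords i)) => k e1 e2; subst k; uip.
Qed.

Lemma pad_in_valid : zzvalid pad_in.
Proof.
split; first exact: mof.
split; first exact: hf.
split; first by move=> i; exact: (pid_valid HD).
split.
  move=> j /=; case: (fibre_of (psi j)) => [[j' e]|n]; last by case: (neq_self_false (n j)).
  by apply: hcast_valid; exact: (pid_valid HD).
split; first by move=> i p e; case: i / e => _ e' /=; exact: pad_in_fwd.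
split; first by move=> i p e; case: i / e => _ e' /=; exact: pad_in_bwd.
split.
  by move=> j j' e e'; have ej := injf e; subst j'; case: (ordw_ords_neq e').
by move=> i Hi e /=; exact: pad_in_gap.
Qed.

Lemma pad_out_fwd i (s : fibre i) :
  pcompose (pad_out_sing s) (pad_fwd s) = pcompose (zfwd T i) (mreg f (ordw i)).
Proof.
case: s => [[j e]|n]; last by rewrite /= (pcomp1r HD).
case: i / e => /=; rewrite hcast_compr.
case: (zzvalid_pvalid vf) => _ _ _ _ [c1 _ _ _].
by apply: rs_eq_hcast; apply: c1 => j' /injf ->.
Qed.

Lemma pad_out_bwd i (s : fibre i) :
  pcompose (pad_out_sing s) (pad_bwd s) = pcompose (zbwd T i) (mreg f (ords i)).
Proof.
case: (zzvalid_pvalid vf) => _ _ _ _ [_ c2 _ c4].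
case: s => [[j e]|n].
  case: i / e => /=; rewrite hcast_compr.
  by apply: rs_eq_hcast; apply: c2 => j' /injf ->.
by rewrite /= hcast_compr (pcomp1r HD); apply: rs_eq_hcast; exact: c4.
Qed.

Lemma pad_out_valid : zzvalid pad_out.
Proof.
case: (zzvalid_pvalid vf) => _ _ vrf vsf _.
split; first exact: monotone_id.
split; first by move=> i; rewrite hatn_id.
split; first exact: vrf.
split.
  move=> i /=; case: (fibre_of i) => [[j e]|n]; first exact: hcast_valid.
  by apply: (pcomp_valid HD); [case: zT | exact: vrf].
split; first by move=> i p e; case: i / e => _ e'; uip; exact: pad_out_fwd.
split; first by move=> i p e; case: i / e => _ e'; uip; exact: pad_out_bwd.
split; first by move=> j j' e; case: j / e => e'; case: (ordw_ords_neq e').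
by move=> i Hi; case: (neq_self_false (Hi i)).
Qed.

Lemma pad_factor : zcomp pad_out pad_in = f.
Proof.
rewrite -[RHS]zzmap_eta; apply: zzmap_ext => [i|j] /=; first by rewrite (pcomp1r HD).
case: (fibre_of (psi j)) => [[j' e]|n]; last by case: (neq_self_false (n j)).
have ej := injf e; subst j' => /=.
by move: (esym (injf e)) => e1; uip; rewrite /= (pcomp1r HD).
Qed.

(* Both [zid T] and [pad_out o v] are lifts of [f] along [f] over the identity,
   where [v] lifts [pad_in]; by uniqueness they agree. *)
Lemma pad_section : exists v : zzmap T pad,
  [/\ zzvalid v, zcomp v f = pad_in, mfs v =1 id & zcomp pad_out v = zid T].
Proof.
have [v [[vv [Evf Evs]] _]] := cf pad_zvob pad_in_valid (monotone_id (n := M)) (fun j => erefl).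
have [v0 [_ U]] := cf zT vf (monotone_id (n := M)) (fun j => erefl).
exists v; split => //.
rewrite (U _ (zid_valid HD T) (zcomp1l HD f) (fun _ => erefl)).
apply: U; first exact: (zcomp_valid HD vv pad_out_valid).
- by rewrite -(zcompA HD) Evf pad_factor.
- by move=> i /=; rewrite Evs.
Qed.

Lemma iso_sing_of_section j (s : fibre (psi j)) (V : phom (zsing T (psi j)) (pad_sing s)) :
  pvhom V -> pcompose V (msing f j) = pad_in_sing s -> pcompose (pad_out_sing s) V = pid _ ->
  isoP (msing f j).
Proof.
case: (zzvalid_pvalid vf) => _ _ _ vsf _.
case: s V => [[j' e]|n] V; last by case: (neq_self_false (n j)).
have ej := injf e; subst j' => /=.
move: V; move: (esym (injf e)) => e1; uip => /= V vV H1 H2.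
by split => //; exists V.
Qed.

Lemma iso_gap_of_section i (s : fibre i) (V : phom (zsing T i) (pad_sing s))
    (R : phom (zreg T (ordw i)) (zreg X (fh (ordw i)))) :
  (forall j, psi j != i) -> pvhom V ->
  pcompose (pad_out_sing s) V = pid _ -> pcompose V (zfwd T i) = pcompose (pad_fwd s) R ->
  pcompose R (mreg f (ordw i)) = pid _ ->
  isoP (pcompose (zfwd T i) (mreg f (ordw i))).
Proof.
case: (zzvalid_pvalid vf) => _ _ vrf _ _.
case: s V => [[j e]|n] V Hi; first by exfalso; move: (Hi j); rewrite e eqxx.
move=> /= vV H1 H2 H3.
split; first by apply: (pcomp_valid HD) => //; case: zT.
exists V; split => //; split => //.
by rewrite (pcompA HD) H2 (pcomp1l HD) H3.
Qed.

Lemma simple_slicedeg : slicedeg P f.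
Proof.
have [[vs vh vr vsg] [vv Evf Evs Ewv]] := pad_section.
have es : vs = (fun i => i) by apply: functional_extensionality.
subst vs.
case: (zzvalid_pvalid vv) => _ hv vrv vsv [c1v _ _ _].
have eh : vh = (fun i => i).
  by apply: functional_extensionality => i; have /= -> := hv i; rewrite hatn_id.
subst vh.
have [Er Es] := Zzmap_inj (Evf : @Zzmap D X pad psi fh _ _ = @Zzmap D X pad psi fh _ _).
have [Er' Es'] := Zzmap_inj (Ewv : @Zzmap D T T (fun i => i) (fun i => i) _ _ =
                                   @Zzmap D T T (fun i => i) (fun i => i) _ _).
have Hv1 i : pcompose (vsg i) (zfwd T i) = pcompose (pad_fwd (fibre_of i)) (vr (ordw i)).
  by apply: rs_inj; exact: (c1v i (fun j e => eq_leq (f_equal val (esym e)))).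
case: zX => xo xso _ _; case: zT => to tso _ _.
case: (zzvalid_pvalid vf) => _ _ vrf vsf _.
split => //.
- move=> i; apply: (deg_iso HP) => //.
  by split => //; exists (vr i); split; [exact: vrv | split; [exact: Er | exact: Er']].
- move=> j; apply: (deg_iso HP) => //.
  by apply: (iso_sing_of_section (V := vsg (psi j))); [exact: vsv | exact: Es | exact: Es'].
- move=> i Hi; apply: (deg_iso HP) => //.
  by apply: (iso_gap_of_section (V := vsg i) (R := vr (ordw i)));
    [exact: Hi | exact: vsv | exact: Es' | exact: Hv1 | exact: Er].
Qed.
End Simple.

Section DegZ.
Variable D : precat.
Hypothesis HD : precat_laws D.
Variable P : forall a b : pob D, phom a b -> Prop.
Hypothesis HP : deg_axioms P.

Lemma deg_slicedeg (X Y : zz D) (f : zzmap X Y) : degZ P f -> slicedeg P f.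
Proof.
elim=> {X Y f}.
- by move=> X Y f zX zY vf cf inj; exact: simple_slicedeg.
- by move=> X Y f _ _ vf vert Hr Hs; exact: slicedeg_vertical.
- by move=> X Y W f g _ Gf _ Gg; exact: slicedeg_comp.
Qed.

Lemma deg_axioms_Z : deg_axioms (@degZ D P : forall a b : pob (Zpre D), phom a b -> Prop).
Proof.
split.
- by move=> a b f /deg_slicedeg [].
- move=> a b f za zb iso; apply: degZ_par => //.
  + by case: iso.
  + exact: iso_vertical.
  + by move=> i; apply: (deg_iso HP); [case: za | case: zb | exact: iso_reg_slice].
  + by move=> j; apply: (deg_iso HP); [case: za | case: zb | exact: iso_sing_slice].
- by move=> a b c g f Hf Hg; exact: degZ_comp.
- by move=> a b f /deg_slicedeg Gf c u v E; exact: (slicedeg_mono HP Gf E).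
Qed.
End DegZ.

Lemma deg_axioms_Zn (C : category) n : deg_axioms (@isdeg (precat_of C) n).
Proof.
elim: n => [|n IH]; first exact: deg_axioms_iso.
exact: (deg_axioms_Z (precat_laws_Zn C n) IH).
Qed.

(** * Zigzag isomorphisms from slice isomorphisms *)

Section Transport.
Variable D : precat.
Hypothesis HD : precat_laws D.

(* Over a gap, the regular slices at [ordw i] and [ords i] have a common source;
   monicity of the gap composite of [g] forces the comparison maps to agree. *)
Lemma gap_transport (I J : Type) (A1 A2 : I -> pob D) (S : J -> pob D) (j : J)
    (Z Z' : pob D) (a b c : I) (E : a = c) (Eb : b = c)
    (fr1 : phom (A1 a) Z) (gr1 : phom (A2 a) Z) (fr2 : phom (A1 b) Z') (gr2 : phom (A2 b) Z')
    (t : phom Z (S j)) (t' : phom Z' (S j)) (phi : phom (A1 c) (A2 c))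
    (phi1 : phom (A1 a) (A2 a)) :
  pack (A := A1) (B := S) (pcompose t fr1) = pack (pcompose t' fr2) ->
  pack (A := A2) (B := S) (pcompose t gr1) = pack (pcompose t' gr2) ->
  (forall W (u v : phom W (A2 a)),
     pcompose (pcompose t gr1) u = pcompose (pcompose t gr1) v -> u = v) ->
  fr1 = pcompose gr1 phi1 ->
  fr2 = pcompose gr2 (hcast (congr1 A1 (esym Eb)) (congr1 A2 (esym Eb)) phi) ->
  fr1 = pcompose gr1 (hcast (congr1 A1 (esym E)) (congr1 A2 (esym E)) phi).
Proof.
move=> Hf Hg mono H1 H2; subst c b; move: H2 => /= H2.
have {}Hf := pack_inj Hf; have {}Hg := pack_inj Hg.
suff -> : phi = phi1 by [].
apply: mono; symmetry.
by rewrite -(pcompA HD) -H1 Hf H2 (pcompA HD) -Hg.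
Qed.

Lemma square_transport (I J : Type) (A1 A2 : I -> pob D) (B1 B2 : pob D) (S : J -> pob D)
    (j : J) (Z : pob D) (Phi : forall k, phom (A1 k) (A2 k)) (a c : I) (E : c = a)
    (F : phom B1 (S j)) (G : phom B2 (S j)) (x : phom (A1 a) B1) (y : phom (A2 a) B2)
    (t : phom Z (S j)) (fr : phom (A1 c) Z) (gr : phom (A2 c) Z) (ps : phom B1 B2) :
  pack (A := A1) (B := S) (pcompose F x) = pack (pcompose t fr) ->
  pack (A := A2) (B := S) (pcompose G y) = pack (pcompose t gr) ->
  fr = pcompose gr (Phi c) -> F = pcompose G ps ->
  (forall W (u v : phom W B2), pcompose G u = pcompose G v -> u = v) ->
  pcompose ps x = pcompose y (Phi a).
Proof.
move=> Hf Hg H3 H4 mono; subst c.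
have {}Hf := pack_inj Hf; have {}Hg := pack_inj Hg.
by apply: mono; rewrite !(pcompA HD) -H4 Hf H3 Hg (pcompA HD).
Qed.
End Transport.

Section SliceIso.
Variable D : precat.
Hypothesis HD : precat_laws D.
Variable P : forall a b : pob D, phom a b -> Prop.
Hypothesis HP : deg_axioms P.
Variables (N : nat) (xr yr : 'I_N.+1 -> pob D) (xs ys : 'I_N -> pob D)
  (xf : forall j, phom (xr (ordw j)) (xs j)) (xb : forall j, phom (xr (ords j)) (xs j))
  (yf : forall j, phom (yr (ordw j)) (ys j)) (yb : forall j, phom (yr (ords j)) (ys j))
  (T : zz D) (fs : 'I_N -> 'I_(zlen T))
  (fr : forall i, phom (xr (hatn fs i)) (zreg T i)) (fsg : forall j, phom (xs j) (zsing T (fs j)))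
  (gr : forall i, phom (yr (hatn fs i)) (zreg T i)) (gsg : forall j, phom (ys j) (zsing T (fs j))).

Let X := @Zz D N xr xs xf xb.
Let Y := @Zz D N yr ys yf yb.
Let f := @Zzmap D X T fs (hatn fs) fr fsg.
Let g := @Zzmap D Y T fs (hatn fs) gr gsg.
Hypotheses (Gf : slicedeg P f) (Gg : slicedeg P g).
Hypothesis Hs : forall j, exists ph : phom (xs j) (ys j),
  pvhom ph /\ fsg j = pcompose (gsg j) ph.
Hypothesis Hr : forall i, exists ph : phom (xr (hatn fs i)) (yr (hatn fs i)),
  pvhom ph /\ fr i = pcompose (gr i) ph.

Let mof : monotone fs. Proof. by case: Gf => /zzvalid_pvalid []. Qed.
Let injf : injective fs. Proof. by case: Gf. Qed.

Lemma reg_factor_fibre (i1 : 'I_(zlen T).+1) (ph : phom (xr (hatn fs i1)) (yr (hatn fs i1))) :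
  (forall i, hatn fs i = hatn fs i1 -> i <= i1) -> fr i1 = pcompose (gr i1) ph ->
  forall d (i : 'I_(zlen T).+1), i1 - i = d -> forall E : hatn fs i = hatn fs i1,
  fr i = pcompose (gr i) (hcast (congr1 xr (esym E)) (congr1 yr (esym E)) ph).
Proof.
move=> Hmax Hph; elim=> [|d IH] i Hd E.
  have ei : i = i1 by apply/val_inj/eqP; rewrite eqn_leq (Hmax _ E) -subn_eq0 Hd.
  by subst i; uip.
have Hii : i < zlen T.
  by apply: (@leq_trans i1); [rewrite -subn_gt0 Hd | rewrite -ltnS ltn_ord].
have [ii ei] : exists ii : 'I_(zlen T), ordw ii = i by exists (Ordinal Hii); apply: val_inj.
clear Hii; subst i.
have Eb : hatn fs (ords ii) = hatn fs i1.
  apply/val_inj/eqP; rewrite eqn_leq; apply/andP; split.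
  - by apply: hatn_mono => //=; rewrite -subn_gt0 Hd.
  - by rewrite -E; apply: hatn_mono.
have Hn p : fs p != ii.
  apply/negP => /eqP Ep; move: E.
  rewrite -Eb -Ep hatn_first_inj // hatn_last_inj // => /(congr1 val) /=.
  by rewrite /bump leq0n add1n; exact: n_Sn.
case: (Gf) => /zzvalid_pvalid [_ _ _ _ [_ _ _ c4f]] _ _ _ _.
case: (Gg) => /zzvalid_pvalid [_ _ _ _ [_ _ _ c4g]] _ _ _ eg.
have [ph1 [_ Hph1]] := Hr (ordw ii).
apply: (@gap_transport D HD _ _ xr yr (zsing T) ii _ _ _ _ _ E Eb _ _
          (fr (ords ii)) (gr (ords ii)) (zfwd T ii) (zbwd T ii) ph ph1).
- exact: (c4f ii Hn).
- exact: (c4g ii Hn).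
- by move=> W u v; exact: (deg_mono HP (eg ii Hn)).
- exact: Hph1.
- by apply: IH; rewrite /= subnS Hd.
Qed.

Lemma reg_factor (k : 'I_N.+1) : exists ph : phom (xr k) (yr k), pvhom ph /\
  forall i (E : hatn fs i = k),
    fr i = pcompose (gr i) (hcast (congr1 xr (esym E)) (congr1 yr (esym E)) ph).
Proof.
have [i1 [Ei1 Hmax]] := hatn_fibre_max mof injf k.
case: k / Ei1 Hmax => Hmax.
have [ph [vph Hph]] := Hr i1.
by exists ph; split => // i E; exact: (reg_factor_fibre Hmax Hph erefl).
Qed.

Lemma slice_factor : exists phi : zzmap X Y, zzvalid phi /\ f = zcomp g phi.
Proof.
case: (Gf) => /zzvalid_pvalid [_ _ _ _ [c1f c2f _ _]] _ _ sf _.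
case: (Gg) => /zzvalid_pvalid [_ _ _ _ [c1g c2g _ _]] _ _ sg _.
pose phir k := proj1_sig (constructive_indefinite_description _ (reg_factor k)).
have Hphir k : pvhom (phir k) /\ forall i (E : hatn fs i = k),
    fr i = pcompose (gr i) (hcast (congr1 xr (esym E)) (congr1 yr (esym E)) (phir k)).
  exact: (proj2_sig (constructive_indefinite_description _ (reg_factor k))).
pose phis j := proj1_sig (constructive_indefinite_description _ (Hs j)).
have Hphis j : pvhom (phis j) /\ fsg j = pcompose (gsg j) (phis j).
  exact: (proj2_sig (constructive_indefinite_description _ (Hs j))).
exists (@Zzmap D X Y (fun j => j) (fun i => i) phir phis); split; last first.
  by apply: zzmap_ext => [i|j] /=; [exact: ((Hphir _).2 _ erefl) | exact: (Hphis j).2].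
split; first exact: monotone_id.
split; first by move=> i; rewrite hatn_id.
split; first by move=> i; case: (Hphir i).
split; first by move=> j; case: (Hphis j).
split.
  move=> i p e; case: i / e => Hmin e'; uip => /=.
  apply: (@square_transport D HD _ _ xr yr _ _ (zsing T) (fs p) _ phir _ _
            (hatn_first_inj mof injf p) (fsg p) (gsg p) (xf p) (yf p)
            (zfwd T (fs p)) (fr (ordw (fs p))) (gr (ordw (fs p))) (phis p)).
  + by apply: c1f => j /injf ->.
  + by apply: c1g => j /injf ->.
  + exact: ((Hphir _).2 _ erefl).
  + exact: (Hphis p).2.
  + by move=> W u v; exact: (deg_mono HP (sg p)).
split.
  move=> i p e; case: i / e => Hmin e'; uip => /=.
  apply: (@square_transport D HD _ _ xr yr _ _ (zsing T) (fs p) _ phir _ _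
            (hatn_last_inj mof injf p) (fsg p) (gsg p) (xb p) (yb p)
            (zbwd T (fs p)) (fr (ords (fs p))) (gr (ords (fs p))) (phis p)).
  + by apply: c2f => j /injf ->.
  + by apply: c2g => j /injf ->.
  + exact: ((Hphir _).2 _ erefl).
  + exact: (Hphis p).2.
  + by move=> W u v; exact: (deg_mono HP (sg p)).
split; first by move=> j j' e; case: j / e => e'; case: (ordw_ords_neq e').
by move=> i Hi; case: (neq_self_false (Hi i)).
Qed.
End SliceIso.

Lemma slice_isos_zzmap_iso (D : precat) (HD : precat_laws D)
    (P : forall a b : pob D, phom a b -> Prop) (HP : deg_axioms P)
    (N : nat) (xr yr : 'I_N.+1 -> pob D) (xs ys : 'I_N -> pob D)
    (xf : forall j, phom (xr (ordw j)) (xs j)) (xb : forall j, phom (xr (ords j)) (xs j))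
    (yf : forall j, phom (yr (ordw j)) (ys j)) (yb : forall j, phom (yr (ords j)) (ys j))
    (T : zz D) (fs : 'I_N -> 'I_(zlen T)) (fh gh : 'I_(zlen T).+1 -> 'I_N.+1)
    (fr : forall i, phom (xr (fh i)) (zreg T i)) (fsg : forall j, phom (xs j) (zsing T (fs j)))
    (gr : forall i, phom (yr (gh i)) (zreg T i)) (gsg : forall j, phom (ys j) (zsing T (fs j))) :
  slicedeg P (@Zzmap D (@Zz D N xr xs xf xb) T fs fh fr fsg) ->
  slicedeg P (@Zzmap D (@Zz D N yr ys yf yb) T fs gh gr gsg) ->
  (forall j, exists ph : phom (xs j) (ys j), pvhom ph /\ fsg j = pcompose (gsg j) ph) ->
  (forall i, exists ph : phom (xr (fh i)) (yr (gh i)), pvhom ph /\ fr i = pcompose (gr i) ph) ->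
  (forall j, exists ph : phom (ys j) (xs j), pvhom ph /\ gsg j = pcompose (fsg j) ph) ->
  (forall i, exists ph : phom (yr (gh i)) (xr (fh i)), pvhom ph /\ gr i = pcompose (fr i) ph) ->
  exists phi : zzmap (@Zz D N xr xs xf xb) (@Zz D N yr ys yf yb), isoP (D := Zpre D) phi /\
    @Zzmap D (@Zz D N xr xs xf xb) T fs fh fr fsg =
    zcomp (@Zzmap D (@Zz D N yr ys yf yb) T fs gh gr gsg) phi.
Proof.
move=> Gf Gg Hs Hr Hs' Hr'.
have efh : fh = hatn fs by apply: functional_extensionality; case: Gf => /zzvalid_pvalid [].
have egh : gh = hatn fs by apply: functional_extensionality; case: Gg => /zzvalid_pvalid [].
subst fh gh.
have [phi [vphi Ephi]] := slice_factor HD HP Gf Gg Hs Hr.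
have [psi [vpsi Epsi]] := slice_factor HD HP Gg Gf Hs' Hr'.
exists phi; split => //; split => //; exists psi; split => //; split => /=.
- by apply: (slicedeg_mono HP Gf); rewrite (zcompA HD) -Epsi -Ephi (zcomp1r HD).
- by apply: (slicedeg_mono HP Gg); rewrite (zcompA HD) -Ephi -Epsi (zcomp1r HD).
Qed.

(** * Degeneracy maps with the same image in [Z^n(1)] *)

Definition deg_image_iso (D E : precat) (P : forall a b : pob D, phom a b -> Prop)
    (F : prefunctor D E) : Prop :=
  forall (T X Y : pob D) (f : phom X T) (g : phom Y T),
    pvob X -> pvob Y -> P _ _ f -> P _ _ g ->
    existT (fun a => phom a (fob F T)) (fob F X) (fhom F f) =
    existT (fun a => phom a (fob F T)) (fob F Y) (fhom F g) ->
    exists phi : phom X Y, isoP phi /\ f = pcompose g phi.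

Lemma deg_image_iso_base (C : category) : deg_image_iso (@isdeg (precat_of C) 0) (to_term C).
Proof.
move=> T X Y f g _ _ df [_ [g' [_ [/= g1 g2]]]] _.
exists (pcompose g' f); split; last by rewrite /= ccompA g2 ccomp1l.
by apply: (deg_comp (deg_axioms_iso C)) => //; split => //; exists g.
Qed.

Section ZImage.
Variables (D E : precat) (F : prefunctor D E) (T : zz D).
Variables (N : nat) (xr yr : 'I_N.+1 -> pob D) (xs ys : 'I_N -> pob D)
  (xf : forall j, phom (xr (ordw j)) (xs j)) (xb : forall j, phom (xr (ords j)) (xs j))
  (yf : forall j, phom (yr (ordw j)) (ys j)) (yb : forall j, phom (yr (ords j)) (ys j)).
Let X := @Zz D N xr xs xf xb.
Let Y := @Zz D N yr ys yf yb.
Let image (Z : zz D) (f : zzmap Z T) :=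
  existT (fun a => zzmap a (zfob F T)) (zfob F Z) (zfhom F f).

(* The index [j] is transported to the other side through [insub], since the
   lengths of the two images agree only propositionally. *)
Lemma image_mfs (f : zzmap X T) (g : zzmap Y T) : image f = image g -> mfs g = mfs f.
Proof.
move=> Hsh; apply: functional_extensionality => j; apply: val_inj.
have := congr1 (fun s : {a : zz E & zzmap a (zfob F T)} =>
  omap (fun j' => nat_of_ord (mfs (projT2 s) j'))
       (insub (nat_of_ord j) : option 'I_(zlen (projT1 s)))) Hsh.
by rewrite /= !valK /= => [[]].
Qed.

Variables (fs : 'I_N -> 'I_(zlen T)) (fh gh : 'I_(zlen T).+1 -> 'I_N.+1)
  (fr : forall i, phom (xr (fh i)) (zreg T i)) (fsg : forall j, phom (xs j) (zsing T (fs j)))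
  (gr : forall i, phom (yr (gh i)) (zreg T i)) (gsg : forall j, phom (ys j) (zsing T (fs j))).
Let f := @Zzmap D X T fs fh fr fsg.
Let g := @Zzmap D Y T fs gh gr gsg.
Hypothesis Hsh : image f = image g.

Lemma image_reg_slice i :
  existT (fun a => phom a (fob F (zreg T i))) (fob F (xr (fh i))) (fhom F (fr i)) =
  existT (fun a => phom a (fob F (zreg T i))) (fob F (yr (gh i))) (fhom F (gr i)).
Proof.
exact: (congr1 (fun s : {a : zz E & zzmap a (zfob F T)} =>
  existT (fun a => phom a (fob F (zreg T i)))
         (zreg (projT1 s) (mfh (projT2 s) i)) (mreg (projT2 s) i)) Hsh).
Qed.

Lemma image_sing_slice j :
  existT (fun a => phom a (fob F (zsing T (fs j)))) (fob F (xs j)) (fhom F (fsg j)) =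
  existT (fun a => phom a (fob F (zsing T (fs j)))) (fob F (ys j)) (fhom F (gsg j)).
Proof.
have := congr1 (fun s : {a : zz E & zzmap a (zfob F T)} =>
  omap (fun j' => existT (fun k : 'I_(zlen T) => {a : pob E & phom a (fob F (zsing T k))})
     (mfs (projT2 s) j')
     (existT (fun a => phom a (fob F (zsing T (mfs (projT2 s) j'))))
        (zsing (projT1 s) j') (msing (projT2 s) j')))
     (insub (nat_of_ord j) : option 'I_(zlen (projT1 s)))) Hsh.
by rewrite /= !valK /= => [[]] _ E2; exact: (inj_pair2 _ _ _ _ _ E2).
Qed.
End ZImage.

Section ZImageIso.
Variables D E : precat.
Hypothesis HD : precat_laws D.
Variable P : forall a b : pob D, phom a b -> Prop.
Hypothesis HP : deg_axioms P.
Variable F : prefunctor D E.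
Hypothesis HF : deg_image_iso P F.

Lemma deg_image_iso_Z :
  deg_image_iso (@degZ D P : forall a b : pob (Zpre D), phom a b -> Prop) (Zfun F).
Proof.
move=> T X Y f g zX zY df dg Hsh.
have Gf := deg_slicedeg HD HP df; have Gg := deg_slicedeg HD HP dg.
have el : zlen X = zlen Y := congr1 (fun s => zlen (projT1 s)) Hsh.
move: f zX df Gf Hsh el; case: X => N xr xs xf xb f zX df Gf Hsh el /=.
move: g zY dg Gg Hsh el; case: Y => N' yr ys yf yb g zY dg Gg Hsh el /=.
simpl in el; subst N'.
have Efs := image_mfs Hsh.
move: df Gf Hsh Efs; case: f => fs fh fr fsg df Gf Hsh Efs.
move: dg Gg Hsh Efs; case: g => gs gh gr gsg dg Gg Hsh /= Efs.
subst gs.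
case: zX => zxr zxs _ _; case: zY => zyr zys _ _.
case: (Gf) => _ _ Pfr Pfs _; case: (Gg) => _ _ Pgr Pgs _.
apply: (slice_isos_zzmap_iso HD HP Gf Gg).
- move=> j; have [ph [[vph _] E1]] := HF (zxs j) (zys j) (Pfs j) (Pgs j) (image_sing_slice Hsh j).
  by exists ph.
- move=> i; have [ph [[vph _] E1]] := HF (zxr _) (zyr _) (Pfr i) (Pgr i) (image_reg_slice Hsh i).
  by exists ph.
- move=> j; have [ph [[vph _] E1]] :=
    HF (zys j) (zxs j) (Pgs j) (Pfs j) (esym (image_sing_slice Hsh j)).
  by exists ph.
- move=> i; have [ph [[vph _] E1]] :=
    HF (zyr _) (zxr _) (Pgr i) (Pfr i) (esym (image_reg_slice Hsh i)).
  by exists ph.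
Qed.
End ZImageIso.

Lemma deg_image_iso_Zn (C : category) n :
  deg_image_iso (@isdeg (precat_of C) n) (Znf n (to_term C)).
Proof.
elim: n => [|n IH]; first exact: deg_image_iso_base.
exact: (deg_image_iso_Z (precat_laws_Zn C n) (deg_axioms_Zn C n) IH).
Qed.

(** * Finiteness of [Deg(T)] *)

Lemma dependent_choice (A : Type) (B : A -> Type) (R : forall a, B a -> Prop) :
  (forall a, exists b, R a b) -> exists h : forall a, B a, forall a, R a (h a).
Proof.
move=> H; exists (fun a => proj1_sig (constructive_indefinite_description _ (H a))).
by move=> a; exact: (proj2_sig (constructive_indefinite_description _ (H a))).
Qed.

Lemma inord_bigmax (I : finType) (k : I -> nat) (i : I) (a : 'I_(k i)) :
  (inord a : 'I_(\max_(i' : I) k i').+1) = a :> nat.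
Proof. by rewrite inordK // ltnS (leq_trans (ltnW (ltn_ord a))) ?leq_bigmax. Qed.

Definition deg_finite (D : precat) (P : forall a b : pob D, phom a b -> Prop) : Prop :=
  forall T : pob D, pvob T ->
  exists (k : nat) (l : 'I_k -> {X : pob D & phom X T}),
     (forall i, pvob (projT1 (l i)) /\ P _ _ (projT2 (l i))) /\
     (forall (X : pob D) (f : phom X T), pvob X -> P _ _ f ->
        exists (i : 'I_k) (phi : phom X (projT1 (l i))),
          isoP phi /\ f = pcompose (projT2 (l i)) phi).

Lemma deg_finite_base (C : category) : deg_finite (@isdeg (precat_of C) 0).
Proof.
move=> T _; exists 1, (fun _ => existT (fun X => phom X T) T (cid T)); split.
- by move=> i; split => //=; split => //; exists (cid T); split => //; split; exact: ccomp1l.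
- by move=> X f _ df; exists ord0, f; split => //=; rewrite ccomp1l.
Qed.

Lemma factor_through_iso (D : precat) (HD : precat_laws D) (a b c t : pob D)
    (F : phom a t) (G : phom b t) (L : phom c t) (p1 : phom a c) (p2 : phom b c) :
  pvhom p1 -> isoP p2 -> F = pcompose L p1 -> G = pcompose L p2 ->
  exists p : phom a b, pvhom p /\ F = pcompose G p.
Proof.
move=> v1 [_ [q [vq [q1 q2]]]] E1 E2.
exists (pcompose q p1); split; first exact: (pcomp_valid HD).
by rewrite E2 (pcompA HD) -((pcompA HD) _ _ _ _ L) q2 (pcomp1r HD).
Qed.

Section ZFinite.
Variable D : precat.
Hypothesis HD : precat_laws D.
Variable P : forall a b : pob D, phom a b -> Prop.
Hypothesis HP : deg_axioms P.
Variable T : zz D.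
Hypothesis zT : zvob T.
Let M := zlen T.
Variable ks : 'I_M -> nat.
Variable ls : forall i : 'I_M, 'I_(ks i) -> {X : pob D & phom X (zsing T i)}.
Variable kr : 'I_M.+1 -> nat.
Variable lr : forall i : 'I_M.+1, 'I_(kr i) -> {X : pob D & phom X (zreg T i)}.
Hypothesis covs : forall i (X : pob D) (f : phom X (zsing T i)), pvob X -> P f ->
  exists (a : 'I_(ks i)) (phi : phom X (projT1 (ls a))),
    isoP phi /\ f = pcompose (projT2 (ls a)) phi.
Hypothesis covr : forall i (X : pob D) (f : phom X (zreg T i)), pvob X -> P f ->
  exists (a : 'I_(kr i)) (phi : phom X (projT1 (lr a))),
    isoP phi /\ f = pcompose (projT2 (lr a)) phi.

Let K := \max_(i < M) ks i.
Let K' := \max_(i < M.+1) kr i.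

(* The length of the source, [f_s] (padded to a map ['I_M -> 'I_M]), and for
   every slice the index of its representative in [ls] resp. [lr]. *)
Definition code := ('I_M.+1 * {ffun 'I_M -> 'I_M} * {ffun 'I_M -> 'I_K.+1} *
  {ffun 'I_M.+1 -> 'I_K'.+1})%type.

Definition encodes (c : code) (X : zz D) (f : zzmap X T) : Prop :=
  [/\ (zlen X : nat) = c.1.1.1,
      forall j : 'I_(zlen X), exists k : 'I_M, (k : nat) = j /\ mfs f j = c.1.1.2 k,
      forall j : 'I_(zlen X), exists (h : (c.1.2 (mfs f j) : nat) < ks (mfs f j))
         (phi : phom (zsing X j) (projT1 (ls (Ordinal h)))),
         isoP phi /\ msing f j = pcompose (projT2 (ls (Ordinal h))) phi
    & forall i, exists (h : (c.2 i : nat) < kr i)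
         (phi : phom (zreg X (mfh f i)) (projT1 (lr (Ordinal h)))),
         isoP phi /\ mreg f i = pcompose (projT2 (lr (Ordinal h))) phi].

Lemma encodes_exists (X : zz D) (f : zzmap X T) :
  zvob X -> degZ P f -> exists c, encodes c f.
Proof.
move=> [zxr zxs _ _] /(deg_slicedeg HD HP) [vf injf rf sf _].
have hN : zlen X < M.+1 by rewrite ltnS; have := @leq_card _ _ (mfs f) injf; rewrite !card_ord.
have [idx Hidx] := dependent_choice (fun j => covs (zxs j) (sf j)).
have [idr Hidr] := dependent_choice (fun i => covr (zxr (mfh f i)) (rf i)).
exists (Ordinal hN,
  [ffun k : 'I_M => odflt k (omap (mfs f) (insub (nat_of_ord k) : option 'I_(zlen X)))],
  [ffun i : 'I_M => odflt ord0
     (omap (fun j => inord (idx j) : 'I_K.+1) [pick j | mfs f j == i])],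
  [ffun i : 'I_M.+1 => inord (idr i) : 'I_K'.+1]).
split => //=.
- move=> j; have hj : (j : nat) < M by apply: leq_trans (ltn_ord j) _; rewrite -ltnS.
  by exists (Ordinal hj); rewrite ffunE /= valK.
- move=> j; rewrite ffunE.
  case: pickP => [j' /eqP /injf Ej|/(_ j)]; last by rewrite eqxx.
  subst j' => /=.
  have h : (inord (idx j) : 'I_K.+1) < ks (mfs f j) by rewrite inord_bigmax.
  by exists h; have -> : Ordinal h = idx j by apply/val_inj/inord_bigmax.
- move=> i; rewrite ffunE.
  have h : (inord (idr i) : 'I_K'.+1) < kr i by rewrite inord_bigmax.
  by exists h; have -> : Ordinal h = idr i by apply/val_inj/inord_bigmax.
Qed.

Lemma encodes_iso (c : code) (X Y : zz D) (f : zzmap X T) (g : zzmap Y T) :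
  degZ P f -> degZ P g -> encodes c f -> encodes c g ->
  exists phi : zzmap X Y, isoP (D := Zpre D) phi /\ f = zcomp g phi.
Proof.
move=> /(deg_slicedeg HD HP) Gf /(deg_slicedeg HD HP) Gg Ef Eg.
have el : zlen X = zlen Y.
  by case: Ef => e1 _ _ _; case: Eg => e2 _ _ _; rewrite e1 e2.
move: f Gf Ef el; case: X => N xr xs xf xb f Gf Ef el /=.
move: g Gg Eg el; case: Y => N' yr ys yf yb g Gg Eg el /=.
simpl in el; subst N'.
move: Gf Ef; case: f => fs fh fr fsg Gf [/= _ Ef2 Ef3 Ef4].
move: Gg Eg; case: g => gs gh gr gsg Gg [/= _ Eg2 Eg3 Eg4].
have Efs : gs = fs.
  apply: functional_extensionality => j.
  have [k [ek ->]] := Eg2 j; have [k' [ek' ->]] := Ef2 j.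
  by congr (_ _); apply: val_inj; rewrite /= ek ek'.
subst gs.
apply: (slice_isos_zzmap_iso HD HP Gf Gg).
- move=> j; have [h1 [p1 [i1 E1]]] := Ef3 j; have [h2 [p2 [i2 E2]]] := Eg3 j.
  rewrite (eq_irrelevance h2 h1) in p2 i2 E2.
  exact: (factor_through_iso HD (proj1 i1) i2 E1 E2).
- move=> i; have [h1 [p1 [i1 E1]]] := Ef4 i; have [h2 [p2 [i2 E2]]] := Eg4 i.
  rewrite (eq_irrelevance h2 h1) in p2 i2 E2.
  exact: (factor_through_iso HD (proj1 i1) i2 E1 E2).
- move=> j; have [h1 [p1 [i1 E1]]] := Ef3 j; have [h2 [p2 [i2 E2]]] := Eg3 j.
  rewrite (eq_irrelevance h2 h1) in p2 i2 E2.
  exact: (factor_through_iso HD (proj1 i2) i1 E2 E1).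
- move=> i; have [h1 [p1 [i1 E1]]] := Ef4 i; have [h2 [p2 [i2 E2]]] := Eg4 i.
  rewrite (eq_irrelevance h2 h1) in p2 i2 E2.
  exact: (factor_through_iso HD (proj1 i2) i1 E2 E1).
Qed.

Lemma deg_finite_of_slices : exists (k : nat) (l : 'I_k -> {X : zz D & zzmap X T}),
  (forall i, zvob (projT1 (l i)) /\ degZ P (projT2 (l i))) /\
  (forall (X : zz D) (f : zzmap X T), zvob X -> degZ P f ->
     exists (i : 'I_k) (phi : zzmap X (projT1 (l i))),
       isoP (D := Zpre D) phi /\ f = zcomp (projT2 (l i)) phi).
Proof.
(* A representative for each code that is realised at all; the identity of [T]
   stands in for the others. *)
have rep_exists (c : code) : exists s : {X : zz D & zzmap X T},
    [/\ zvob (projT1 s), degZ P (projT2 s) &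
        forall X (f : zzmap X T), zvob X -> degZ P f -> encodes c f -> encodes c (projT2 s)].
  case: (classic (exists s : {X : zz D & zzmap X T},
           [/\ zvob (projT1 s), degZ P (projT2 s) & encodes c (projT2 s)])).
    by move=> [s [zs ds es]]; exists s.
  move=> Hn; exists (existT (fun X => zzmap X T) T (zid T)); split => //=.
    apply: (deg_iso (deg_axioms_Z HD HP)) => //.
    split; first exact: zid_valid.
    by exists (zid T); split; [exact: zid_valid | rewrite /= (zcomp1l HD)].
  by move=> X f zX df ef; case: Hn; exists (existT _ X f).
have [rep Hrep] := dependent_choice rep_exists.
exists #|{: code}|, (fun x => rep (enum_val x)); split.
  by move=> x; case: (Hrep (enum_val x)).
move=> X f zX df.
have [c Ec] := encodes_exists zX df.
exists (enum_rank c); rewrite enum_rankK.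
case: (Hrep c) => zr dr /(_ X f zX df Ec).
exact: encodes_iso.
Qed.
End ZFinite.

Lemma deg_finite_Z (D : precat) (HD : precat_laws D)
    (P : forall a b : pob D, phom a b -> Prop) (HP : deg_axioms P) :
  deg_finite P -> deg_finite (@degZ D P : forall a b : pob (Zpre D), phom a b -> Prop).
Proof.
move=> HF T zT; case: (zT) => ztr zts _ _.
have [ks Hks] := dependent_choice (fun i => HF _ (zts i)).
have [ls Hls] := dependent_choice Hks.
have [kr Hkr] := dependent_choice (fun i => HF _ (ztr i)).
have [lr Hlr] := dependent_choice Hkr.
apply: (@deg_finite_of_slices D HD P HP T zT ks ls kr lr).
- by move=> i; case: (Hls i).
- by move=> i; case: (Hlr i).
Qed.

Lemma deg_finite_Zn (C : category) n : deg_finite (@isdeg (precat_of C) n).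
Proof.
elim: n => [|n IH]; first exact: deg_finite_base.
exact: (deg_finite_Z (precat_laws_Zn C n) (deg_axioms_Zn C n) IH).
Qed.

Theorem lemma4p3 (C : category) (n : nat) (T : pob (Zn n (precat_of C))) :
  pvob T ->
  (forall (X Y : pob (Zn n (precat_of C))) (f : phom X T) (g : phom Y T),
     pvob X -> pvob Y -> isdeg f -> isdeg g ->
     existT (fun a => phom a (fob (Znf n (to_term C)) T))
            (fob (Znf n (to_term C)) X) (fhom (Znf n (to_term C)) f)
     = existT (fun a => phom a (fob (Znf n (to_term C)) T))
            (fob (Znf n (to_term C)) Y) (fhom (Znf n (to_term C)) g) ->
     exists phi : phom X Y, isoP phi /\ f = pcompose g phi)
  /\
  (exists (k : nat) (l : 'I_k -> {X : pob (Zn n (precat_of C)) & phom X T}),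
     (forall i, pvob (projT1 (l i)) /\ isdeg (projT2 (l i))) /\
     (forall (X : pob (Zn n (precat_of C))) (f : phom X T), pvob X -> isdeg f ->
        exists (i : 'I_k) (phi : phom X (projT1 (l i))),
          isoP phi /\ f = pcompose (projT2 (l i)) phi)).
Proof.
move=> zT; split; last exact: deg_finite_Zn.
by move=> X Y f g zX zY df dg; exact: deg_image_iso_Zn.
Qed.
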